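(* Let $\gamma_a,\gamma_s>0$ and consider \[ \begin{cases} \gamma_a T_a'=-\lambda(T_a-T_s)+\varepsilon_a\sigma_B|T_s|^3T_s-2\varepsilon_a\sigma_B|T_a|^3T_a+q\beta_a(T_a),\\ \gamma_s T_s'=-\lambda(T_s-T_a)-\sigma_B|T_s|^3T_s+\varepsilon_a\sigma_B|T_a|^3T_a+q\beta_s(T_s),\\ T_a(0)=T_a^{(0)},\quad T_s(0)=T_s^{(0)}. \end{cases} \] (a) Assume $\lambda=0$, $q>0$, $\sigma_B>0$, $\beta_a=0$, $\beta_s$ is the piecewise linear coalbedo described in the context, $\varepsilon_a>2$, and $T_a^{(0)}\ge0$, $T_s^{(0)}\ge0$. Then the problem admits a unique maximal solution, and this solution blows up in finite time. (b) Assume $\lambda>0$, $q>0$, $\sigma_B>0$, $\beta_a\ge0$ and $\beta_s>0$ are globally Lipschitz continuous on $\mathbb R$, and $\varepsilon_a>2$. Then there exist initial conditions $T_a^{(0)}\ge0$, $T_s^{(0)}\ge0$ for which the solution of the problem blows up in finite time.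
   Context: The piecewise linear coalbedo is $\beta_s(T)=\beta_{s,-}$ for $T\le T_{s,-}$, $\beta_s(T)=\beta_{s,-}+(\beta_{s,+}-\beta_{s,-})\frac{T-T_{s,-}}{T_{s,+}-T_{s,-}}$ for $T\in[T_{s,-},T_{s,+}]$, and $\beta_s(T)=\beta_{s,+}$ for $T\ge T_{s,+}$, where $T_{s,+}>T_{s,-}>0$ and $\beta_{s,+}>\beta_{s,-}>0$. *)

From Stdlib Require Export Reals.
From Coquelicot Require Export Coquelicot.
Open Scope R_scope.

Definition coalbedo (Tm Tp bm bp : R) (T : R) : R :=
  if Rle_dec T Tm then bm
  else if Rle_dec Tp T then bp
  else bm + (bp - bm) * (T - Tm) / (Tp - Tm).

Definition rhs_a (lam eps sB q : R) (ba : R -> R) (Ta Ts : R) : R :=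
  - lam * (Ta - Ts) + eps * sB * (Rabs Ts ^ 3 * Ts)
  - 2 * eps * sB * (Rabs Ta ^ 3 * Ta) + q * ba Ta.

Definition rhs_s (lam eps sB q : R) (bs : R -> R) (Ta Ts : R) : R :=
  - lam * (Ts - Ta) - sB * (Rabs Ts ^ 3 * Ts)
  + eps * sB * (Rabs Ta ^ 3 * Ta) + q * bs Ts.

Definition is_solution (ga gs lam eps sB q : R) (ba bs : R -> R)
    (Ta0 Ts0 : R) (T : R) (Ta Ts : R -> R) : Prop :=
  Ta 0 = Ta0 /\ Ts 0 = Ts0 /\
  filterlim Ta (at_right 0) (locally Ta0) /\
  filterlim Ts (at_right 0) (locally Ts0) /\
  forall t, 0 < t < T ->
    exists dTa dTs, is_derive Ta t dTa /\ is_derive Ts t dTs /\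
      ga * dTa = rhs_a lam eps sB q ba (Ta t) (Ts t) /\
      gs * dTs = rhs_s lam eps sB q bs (Ta t) (Ts t).

Definition unique_maximal_solution_blows_up (ga gs lam eps sB q : R)
    (ba bs : R -> R) (Ta0 Ts0 : R) : Prop :=
  exists (Tmax : R) (Ta Ts : R -> R),
    0 < Tmax /\
    is_solution ga gs lam eps sB q ba bs Ta0 Ts0 Tmax Ta Ts /\
    (forall (T : R) (Ua Us : R -> R), 0 < T ->
       is_solution ga gs lam eps sB q ba bs Ta0 Ts0 T Ua Us ->
       T <= Tmax /\ (forall t, 0 <= t < T -> Ua t = Ta t /\ Us t = Ts t)) /\
    filterlim (fun t => Rabs (Ta t) + Rabs (Ts t)) (at_left Tmax)
      (Rbar_locally p_infty).

Definition globally_lipschitz (f : R -> R) : Prop :=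
  exists L, forall x y, Rabs (f x - f y) <= L * Rabs (x - y).

(* Let V = a T_a + T_s with a = (2 + eps) gamma_a / (4 gamma_s eps).  This weight is chosen so that
   V' = (eps - 2) sigma_B / (4 gamma_s) (|T_s|^3 T_s + 2 |T_a|^3 T_a) + lower order terms,
   and eps > 2 makes the quartic part at least c V^4 on the quadrant T_a, T_s >= 0.  A barrier
   argument shows that the quadrant is invariant.  In (a) the lower order term is
   q beta_s(T_s) / gamma_s >= q beta_{s,-} / gamma_s > 0; in (b) the linear coupling terms are
   dominated as soon as V exceeds a threshold, and data above the threshold stay above it.  Then
   V' >= c V^4 forces V^-3 to reach zero, so no solution lives longer than 1 / (3 c V(0)^3).

   The right-hand side is locally Lipschitz, so the systems
   truncated to boxes have global solutions (Picard iteration), and by Gronwall these coincide with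
   any solution as long as it stays in the box.  Hence a solution that remained bounded up to its
   lifetime could be continued; since V increases, |T_a| + |T_s| is comparable to an increasing
   function and therefore tends to infinity at the maximal time. *)

From Stdlib Require Import Lra Lia Psatz Classical List.
Import ListNotations.

(** * Calculus on the real line *)

Lemma at_right_0_intro (P : R -> Prop) d :
  0 < d -> (forall s, 0 < s < d -> P s) -> at_right 0 P.
Proof.
  intros Hd HP. exists (mkposreal d Hd). intros s Hs Hpos. apply HP. split; [exact Hpos|].
  change (Rabs (s - 0) < d) in Hs. rewrite Rminus_0_r, Rabs_right in Hs; lra.
Qed.

Lemma at_right_0_elim (P : R -> Prop) :
  at_right 0 P -> exists d, 0 < d /\ forall s, 0 < s < d -> P s.
Proof.
  intros [d Hd]. exists d. split; [apply cond_pos|]. intros s Hs. apply Hd; [|lra].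
  change (Rabs (s - 0) < d). rewrite Rminus_0_r, Rabs_right; lra.
Qed.

Lemma filter_forall_In {T I : Type} {F : (T -> Prop) -> Prop} {FF : Filter F}
    (l : list I) (P : I -> T -> Prop) :
  (forall i, In i l -> F (P i)) -> F (fun x => forall i, In i l -> P i x).
Proof.
  induction l as [|i l IH]; intros H.
  - apply filter_forall. intros x i [].
  - apply (filter_imp (fun x => P i x /\ forall j, In j l -> P j x)).
    + intros x [Hi Hl] j [<-|Hj]; auto.
    + apply filter_and; [apply H; now left|]. apply IH. intros j Hj. apply H. now right.
Qed.

Lemma filterlim_lin_comb {T : Type} {F : (T -> Prop) -> Prop} {FF : Filter F}
    (u w : T -> R) a b k1 k2 k3 :
  filterlim u F (locally a) -> filterlim w F (locally b) ->
  filterlim (fun s => k1 * u s + k2 * w s + k3) F (locally (k1 * a + k2 * b + k3)).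
Proof.
  intros Hu Hw.
  apply (filterlim_comp_2 (G := locally (k1 * a + k2 * b)) (H := locally k3)
           (fun s => k1 * u s + k2 * w s) (fun _ => k3) Rplus);
    [| apply filterlim_const | exact (filterlim_plus (V := R_NormedModule) _ k3)].
  apply (filterlim_comp_2 (G := locally (k1 * a)) (H := locally (k2 * b))
           (fun s => k1 * u s) (fun s => k2 * w s) Rplus).
  - exact (filterlim_comp _ _ _ _ _ _ _ _ Hu (filterlim_scal_r (V := R_NormedModule) k1 a)).
  - exact (filterlim_comp _ _ _ _ _ _ _ _ Hw (filterlim_scal_r (V := R_NormedModule) k2 b)).
  - exact (filterlim_plus (V := R_NormedModule) (k1 * a) (k2 * b)).
Qed.

Lemma is_derive_lin_comb (u w : R -> R) t du dw k1 k2 k3 :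
  is_derive u t du -> is_derive w t dw ->
  is_derive (fun s => k1 * u s + k2 * w s + k3) t (k1 * du + k2 * dw).
Proof.
  intros Hu Hw. replace (k1 * du + k2 * dw) with (k1 * du + k2 * dw + 0) by ring.
  apply (is_derive_plus (fun s => k1 * u s + k2 * w s) (fun _ => k3)).
  - apply (is_derive_plus (fun s => k1 * u s) (fun s => k2 * w s));
      apply is_derive_scal; assumption.
  - exact (is_derive_const (K := R_AbsRing) (V := R_NormedModule) k3 t).
Qed.

Lemma is_derive_add_const (u : R -> R) (t d c : R) :
  is_derive u t d -> is_derive (fun s => u s + c) t d.
Proof.
  intros Hu. apply is_derive_Reals. replace d with (d + 0) by ring.
  apply (derivable_pt_lim_plus u (fun _ => c));
    [now apply is_derive_Reals | apply derivable_pt_lim_const].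
Qed.

Lemma is_derive_continuous (f : R -> R) t d : is_derive f t d -> continuous f t.
Proof. intros H. apply (ex_derive_continuous (V := R_NormedModule)). now exists d. Qed.

Lemma mean_value (f df : R -> R) a b : a <= b ->
  (forall s, a <= s <= b -> is_derive f s (df s)) ->
  exists c, a <= c <= b /\ f b - f a = df c * (b - a).
Proof.
  intros Hab H. destruct (MVT_gen f a b df) as [c [Hc Hf]];
    rewrite ?Rmin_left, ?Rmax_right in * by lra.
  - intros x Hx. apply H. lra.
  - intros x Hx. apply continuity_pt_filterlim. eapply is_derive_continuous. apply H. lra.
  - now exists c.
Qed.

Lemma is_derive_pos_at_left (f : R -> R) t d :
  is_derive f t d -> 0 < d -> at_left t (fun r => f r < f t).
Proof.
  intros H Hd. apply is_derive_Reals in H. destruct (H d Hd) as [del Hdel].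
  exists del. intros r Hr Hrt. change R in r. change (Rabs (r - t) < del) in Hr.
  specialize (Hdel (r - t) ltac:(lra) Hr). replace (t + (r - t)) with r in Hdel by ring.
  apply Rabs_def2 in Hdel.
  assert (Hq : f r - f t = (f r - f t) / (r - t) * (r - t)) by (field; lra).
  nra.
Qed.

Lemma locally_pos (f : R -> R) t : continuous f t -> 0 < f t -> locally t (fun r => 0 < f r).
Proof. intros Hf Hpos. exact (Hf _ (open_gt 0 (f t) Hpos)). Qed.

Lemma locally_neg (f : R -> R) t : continuous f t -> f t < 0 -> locally t (fun r => f r < 0).
Proof. intros Hf Hneg. exact (Hf _ (open_lt 0 (f t) Hneg)). Qed.

Lemma at_left_of_locally (P : R -> Prop) t : locally t P -> at_left t P.
Proof. intros H. unfold at_left, within. apply (filter_imp P); [auto|exact H]. Qed.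

Lemma at_left_absurd (P : R -> Prop) t : at_left t P -> at_left t (fun r => ~ P r) -> False.
Proof.
  intros H1 H2. destruct (filter_ex (F := at_left t) _ (filter_and _ _ H1 H2)) as [r [A B]].
  exact (B A).
Qed.

Lemma first_failure (P : R -> Prop) t0 : 0 < t0 -> ~ P t0 -> at_right 0 P ->
  exists t1, 0 < t1 <= t0 /\ (forall r, 0 < r < t1 -> P r) /\ ~ locally t1 P.
Proof.
  intros Ht0 Hbad Hinit.
  set (A := fun s => 0 < s <= t0 /\ forall r, 0 < r <= s -> P r).
  destruct (at_right_0_elim P Hinit) as [d [Hd HP0]].
  assert (HA : A (Rmin (d / 2) t0)).
  { assert (0 < Rmin (d / 2) t0) by (apply Rmin_case; lra).
    pose proof (Rmin_l (d / 2) t0). pose proof (Rmin_r (d / 2) t0).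
    split; [lra|]. intros r Hr. apply HP0. lra. }
  destruct (completeness A) as [t1 [Hub Hlub]].
  { exists t0. intros s Hs. apply Hs. }
  { eexists. exact HA. }
  assert (Ht1 : 0 < t1 <= t0).
  { split.
    - apply Rlt_le_trans with (Rmin (d / 2) t0); [apply HA | apply Hub, HA].
    - apply Hlub. intros s Hs. apply Hs. }
  assert (Hbefore : forall r, 0 < r < t1 -> P r).
  { intros r Hr. apply NNPP. intros Hn.
    assert (Hr_ub : is_upper_bound A r).
    { intros s [Hs HPs]. apply Rnot_lt_le. intros Hrs. apply Hn, HPs. lra. }
    specialize (Hlub r Hr_ub). lra. }
  exists t1. split; [exact Ht1|]. split; [exact Hbefore|]. intros [del Hdel].
  assert (Hdel0 : 0 < del) by apply cond_pos.
  assert (Hnear : forall r, 0 < r < t1 + del -> P r).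
  { intros r Hr. destruct (Rlt_or_le r t1) as [Hrt|Hrt]; [apply Hbefore; lra|].
    apply Hdel. change (Rabs (r - t1) < del). rewrite Rabs_right; lra. }
  destruct (Req_dec t1 t0) as [<-|Hne]; [apply Hbad, Hnear; lra|].
  set (s := Rmin (t1 + del / 2) t0).
  assert (Hs : t1 < s <= t1 + del / 2).
  { unfold s. pose proof (Rmin_l (t1 + del / 2) t0). pose proof (Rmin_r (t1 + del / 2) t0).
    split; [apply Rmin_case|]; lra. }
  assert (HAs : A s).
  { split; [split; [lra | apply Rmin_r]|]. intros r Hr. apply Hnear. lra. }
  specialize (Hub s HAs). lra.
Qed.

Lemma positivity_barrier (cs : list ((R -> R) * (R -> R))) T :
  (forall g, In g cs -> at_right 0 (fun s => 0 < fst g s)) ->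
  (forall t, 0 < t < T -> forall g, In g cs -> is_derive (fst g) t (snd g t)) ->
  (forall t, 0 < t < T -> (forall g, In g cs -> 0 <= fst g t) ->
     forall g, In g cs -> fst g t = 0 -> 0 < snd g t) ->
  forall t, 0 < t < T -> forall g, In g cs -> 0 < fst g t.
Proof.
  intros Hinit Hder Hout.
  set (good := fun r => forall g, In g cs -> 0 < fst g r).
  intros t0 Ht0. change (good t0). apply NNPP. intros Hbad.
  assert (Hgood0 : at_right 0 good) by (apply filter_forall_In; exact Hinit).
  destruct (first_failure good t0 ltac:(lra) Hbad Hgood0) as (t1 & Ht1 & Hbefore & Hfail).
  assert (Hleft : at_left t1 good).
  { exists (mkposreal t1 (proj1 Ht1)). intros r Hr Hrt. change R in r.
    change (Rabs (r - t1) < t1) in Hr. apply Rabs_def2 in Hr. apply Hbefore. lra. }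
  assert (Hcont : forall g, In g cs -> continuous (fst g) t1).
  { intros g Hg. eapply is_derive_continuous. apply Hder; [lra | exact Hg]. }
  (* At the first failure time no constraint can be negative, nor vanish with positive speed. *)
  assert (Hnonneg : forall g, In g cs -> 0 <= fst g t1).
  { intros g Hg. apply Rnot_lt_le. intros Hneg.
    apply (at_left_absurd good t1 Hleft).
    apply (filter_imp (fun r => fst g r < 0)).
    - intros r Hr Hgr. specialize (Hgr g Hg). lra.
    - apply at_left_of_locally, locally_neg; auto. }
  apply Hfail, filter_forall_In. intros g Hg. apply locally_pos; [now apply Hcont|].
  destruct (Rle_lt_or_eq_dec _ _ (Hnonneg g Hg)) as [|Hz]; [assumption|].
  exfalso. apply (at_left_absurd good t1 Hleft).
  apply (filter_imp (fun r => fst g r < fst g t1)).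
  - intros r Hr Hgr. specialize (Hgr g Hg). lra.
  - apply (is_derive_pos_at_left _ _ (snd g t1)).
    + apply Hder; [lra | exact Hg].
    + apply (Hout t1); auto; lra.
Qed.

Lemma lifetime_of_quartic_growth (V dV : R -> R) T c v0 : 0 < c -> 0 < v0 ->
  (forall t, 0 < t < T -> v0 <= V t /\ is_derive V t (dV t) /\ c * V t ^ 4 <= dV t) ->
  T <= / (3 * c * v0 ^ 3).
Proof.
  intros Hc Hv0 HV. apply Rnot_lt_le. intros HT.
  set (b := / (3 * c * v0 ^ 3)).
  assert (Hb : 0 < b) by (apply Rinv_0_lt_compat; pose proof (pow_lt v0 3 Hv0); nra).
  set (t := (b + T) / 2). set (t' := (t - b) / 2).
  assert (Ht : 0 < t' < t /\ t < T /\ b < t - t') by (unfold t', t; fold b in HT; lra).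
  (* [V ^ -3] decreases at rate at least [3 c], but stays positive. *)
  set (W := fun s => / V s ^ 3).
  set (dW := fun s => - (INR 3 * dV s * V s ^ Init.Nat.pred 3) / (V s ^ 3) ^ 2).
  destruct (mean_value W dW t' t) as [xi [Hxi HW]]; [lra| |].
  { intros s Hs. destruct (HV s ltac:(lra)) as (Hs0 & HdV & _).
    apply (is_derive_inv (fun s => V s ^ 3)); [now apply is_derive_pow|].
    apply pow_nonzero. lra. }
  destruct (HV xi ltac:(lra)) as (Hxi0 & _ & Hgrowth).
  destruct (HV t' ltac:(lra)) as (Ht'0 & _ & _).
  destruct (HV t ltac:(lra)) as (Ht0 & _ & _).
  assert (HdW : dW xi <= - 3 * c).
  { assert (Hpos : 0 < V xi ^ 4) by (apply pow_lt; lra).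
    assert (E : dW xi = - 3 * (dV xi / V xi ^ 4)).
    { unfold dW. simpl INR. simpl Init.Nat.pred. field. lra. }
    rewrite E. apply Rmult_le_compat_neg_l; [lra|].
    apply Rmult_le_reg_r with (V xi ^ 4); [exact Hpos|].
    unfold Rdiv. rewrite Rmult_assoc, Rinv_l by lra. lra. }
  assert (HWt' : W t' <= / v0 ^ 3).
  { apply Rinv_le_contravar; [now apply pow_lt | apply pow_incr; lra]. }
  assert (HWt : 0 < W t) by (apply Rinv_0_lt_compat, pow_lt; lra).
  assert (Hcb : 3 * c * b = / v0 ^ 3).
  { unfold b. field. split; lra. }
  assert (3 * c * b < 3 * c * (t - t')) by (apply Rmult_lt_compat_l; lra).
  nra.
Qed.

Lemma sum_abs_quasi_increasing (u w du dw : R -> R) a T : 0 < a ->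
  (forall t, 0 < t < T -> 0 <= u t /\ 0 <= w t /\
     is_derive u t (du t) /\ is_derive w t (dw t) /\ 0 <= a * du t + dw t) ->
  forall t1 t2, 0 < t1 -> t1 <= t2 -> t2 < T ->
    Rabs (u t1) + Rabs (w t1) <= Rmax a 1 / Rmin a 1 * (Rabs (u t2) + Rabs (w t2)).
Proof.
  intros Ha H t1 t2 Ht1 Ht12 Ht2.
  destruct (mean_value (fun s => a * u s + 1 * w s + 0) (fun s => a * du s + 1 * dw s) t1 t2)
    as [c [Hc Hmv]]; [exact Ht12| |].
  { intros s Hs. destruct (H s ltac:(lra)) as (_ & _ & Du & Dw & _).
    now apply is_derive_lin_comb. }
  destruct (H c ltac:(lra)) as (_ & _ & _ & _ & Hdc).
  destruct (H t1 ltac:(lra)) as (Hu1 & Hw1 & _).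
  destruct (H t2 ltac:(lra)) as (Hu2 & Hw2 & _).
  rewrite !Rabs_right by lra.
  set (mx := Rmax a 1). set (mn := Rmin a 1).
  assert (Hmn : 0 < mn) by (apply Rmin_case; lra).
  assert (mn <= a /\ mn <= 1) by (split; [apply Rmin_l | apply Rmin_r]).
  assert (a <= mx /\ 1 <= mx) by (split; [apply Rmax_l | apply Rmax_r]).
  assert (Hlow : mn * (u t1 + w t1) <= a * u t1 + w t1) by nra.
  assert (Hhigh : a * u t2 + w t2 <= mx * (u t2 + w t2)) by nra.
  apply Rmult_le_reg_l with mn; [exact Hmn|].
  replace (mn * (mx / mn * (u t2 + w t2))) with (mx * (u t2 + w t2)) by (field; lra).
  nra.
Qed.

(** * Lipschitz functions and Picard iteration *)

Definition lipschitz (K : R) (f : R -> R) : Prop :=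
  forall s t, Rabs (f s - f t) <= K * Rabs (s - t).

Definition lipschitz2 (L : R) (G : R -> R -> R) : Prop :=
  forall x y x' y', Rabs (G x y - G x' y') <= L * (Rabs (x - x') + Rabs (y - y')).

Lemma lipschitz_continuous K f t : lipschitz K f -> continuous f t.
Proof.
  intros Hf. apply filterlim_locally. intros eps.
  assert (Hd : 0 < eps / (Rabs K + 1)).
  { apply Rdiv_lt_0_compat; [apply cond_pos | pose proof (Rabs_pos K); lra]. }
  exists (mkposreal _ Hd). intros s Hs. change (Rabs (f s - f t) < eps).
  change (Rabs (s - t) < eps / (Rabs K + 1)) in Hs.
  apply Rle_lt_trans with (Rabs K * Rabs (s - t)).
  { eapply Rle_trans; [apply Hf|]. apply Rmult_le_compat_r; [apply Rabs_pos | apply Rle_abs]. }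
  apply Rle_lt_trans with ((Rabs K + 1) * Rabs (s - t)); [pose proof (Rabs_pos (s - t)); lra|].
  apply Rmult_lt_reg_r with (/ (Rabs K + 1));
    [apply Rinv_0_lt_compat; pose proof (Rabs_pos K); lra|].
  rewrite Rmult_comm, <- Rmult_assoc, Rinv_l, Rmult_1_l by (pose proof (Rabs_pos K); lra).
  exact Hs.
Qed.

Lemma lipschitz_ex_RInt K f a b : lipschitz K f -> ex_RInt f a b.
Proof.
  intros Hf. apply (ex_RInt_continuous (V := R_CompleteNormedModule)).
  intros z _. eapply lipschitz_continuous, Hf.
Qed.

Lemma lipschitz_minus K1 K2 f g :
  lipschitz K1 f -> lipschitz K2 g -> lipschitz (K1 + K2) (fun s => f s - g s).
Proof.
  intros Hf Hg s t. specialize (Hf s t). specialize (Hg s t).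
  replace (f s - g s - (f t - g t)) with ((f s - f t) - (g s - g t)) by ring.
  eapply Rle_trans; [apply Rabs_triang|]. rewrite Rabs_Ropp. lra.
Qed.

Lemma lipschitz_abs K f : lipschitz K f -> lipschitz K (fun s => Rabs (f s)).
Proof. intros Hf s t. eapply Rle_trans; [apply Rabs_triang_inv2 | apply Hf]. Qed.

Lemma lipschitz_comp2 L K G f g : 0 <= L ->
  lipschitz2 L G -> lipschitz K f -> lipschitz K g ->
  lipschitz (L * (K + K)) (fun s => G (f s) (g s)).
Proof.
  intros HL HG Hf Hg s t. eapply Rle_trans; [apply HG|].
  specialize (Hf s t). specialize (Hg s t).
  rewrite Rmult_assoc. apply Rmult_le_compat_l; lra.
Qed.

Lemma lipschitz_primitive K M (h : R -> R) v0 :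
  lipschitz K h -> (forall s, Rabs (h s) <= M) -> lipschitz M (fun t => v0 + RInt h 0 t).
Proof.
  intros Hh HM.
  assert (Hle : forall s t, s <= t -> Rabs (RInt h 0 t - RInt h 0 s) <= M * (t - s)).
  { intros s t Hst.
    rewrite <- (RInt_Chasles (V := R_CompleteNormedModule) h 0 s t)
      by (eapply lipschitz_ex_RInt; exact Hh).
    change (plus ?a ?b) with (a + b). rewrite Rplus_minus_l.
    rewrite Rmult_comm. apply abs_RInt_le_const; auto. eapply lipschitz_ex_RInt; exact Hh. }
  intros s t. replace (v0 + RInt h 0 s - (v0 + RInt h 0 t)) with (RInt h 0 s - RInt h 0 t) by ring.
  destruct (Rle_or_lt t s) as [Hts|Hst].
  - rewrite (Rabs_right (s - t)) by lra. now apply Hle.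
  - rewrite Rabs_minus_sym, (Rabs_left (s - t)) by lra.
    replace (- (s - t)) with (t - s) by ring. apply Hle. lra.
Qed.

Lemma is_lim_seq_le_const (v : nat -> R) (l b : R) N :
  is_lim_seq v l -> (forall n, (N <= n)%nat -> v n <= b) -> l <= b.
Proof.
  intros Hv Hb. apply (is_lim_seq_le_loc v (fun _ => b) l b); [|exact Hv | apply is_lim_seq_const].
  exists N. exact Hb.
Qed.

Lemma eq_of_geometric_bound a b B : (forall k, Rabs (a - b) <= B * (/ 2) ^ k) -> a = b.
Proof.
  intros H.
  assert (Hgeom : is_lim_seq (fun k => B * (/ 2) ^ k) (B * 0)).
  { apply (is_lim_seq_scal_l _ B 0). apply is_lim_seq_geom. rewrite Rabs_right; lra. }
  pose proof (is_lim_seq_le _ _ _ _ H (is_lim_seq_const _) Hgeom) as Hle. simpl in Hle.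
  apply Rminus_diag_uniq, Rabs_eq_0, Rle_antisym; [lra | apply Rabs_pos].
Qed.

Lemma is_lim_seq_of_geometric_gaps (u : nat -> R) B :
  (forall k m, (k <= m)%nat -> Rabs (u m - u k) <= B * (/ 2) ^ k) ->
  is_lim_seq u (real (Lim_seq u)).
Proof.
  intros H. apply Lim_seq_correct', ex_lim_seq_cauchy_corr. intros eps.
  assert (Hy : 0 < eps / (2 * (Rabs B + 1))).
  { apply Rdiv_lt_0_compat; [apply cond_pos | pose proof (Rabs_pos B); lra]. }
  destruct (pow_lt_1_zero (/ 2) ltac:(rewrite Rabs_right; lra) _ Hy) as [N HN].
  exists N. intros n m Hn Hm.
  specialize (HN N (le_n N)). rewrite Rabs_right in HN by (apply Rle_ge, pow_le; lra).
  assert (Hsmall : 2 * (B * (/ 2) ^ N) < eps).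
  { apply Rle_lt_trans with (2 * (Rabs B + 1) * (/ 2) ^ N).
    - pose proof (Rle_abs B). pose proof (pow_le (/ 2) N ltac:(lra)). nra.
    - apply Rmult_lt_reg_r with (/ (2 * (Rabs B + 1))).
      + apply Rinv_0_lt_compat. pose proof (Rabs_pos B). lra.
      + rewrite (Rmult_comm (2 * (Rabs B + 1))), Rmult_assoc, Rinv_r, Rmult_1_r
          by (pose proof (Rabs_pos B); lra). exact HN. }
  pose proof (H N n Hn). pose proof (H N m Hm).
  pose proof (Rabs_triang (u n - u N) (u N - u m)).
  rewrite (Rabs_minus_sym (u N)) in *.
  replace (u n - u N + (u N - u m)) with (u n - u m) in * by ring. lra.
Qed.

Definition lipschitz_pair (K : R) (f : (R -> R) * (R -> R)) : Prop :=
  lipschitz K (fst f) /\ lipschitz K (snd f).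

Definition pair_dist (f g : (R -> R) * (R -> R)) (t : R) : R :=
  Rabs (fst f t - fst g t) + Rabs (snd f t - snd g t).

Lemma dist2_triangle f g h t : pair_dist f h t <= pair_dist f g t + pair_dist g h t.
Proof.
  unfold pair_dist.
  pose proof (Rabs_triang (fst f t - fst g t) (fst g t - fst h t)).
  pose proof (Rabs_triang (snd f t - snd g t) (snd g t - snd h t)).
  replace (fst f t - fst g t + (fst g t - fst h t)) with (fst f t - fst h t) in * by ring.
  replace (snd f t - snd g t + (snd g t - snd h t)) with (snd f t - snd h t) in * by ring.
  lra.
Qed.

Definition picard_step (G : R -> R -> R) (v0 : R) (f : (R -> R) * (R -> R)) : R -> R :=
  fun t => v0 + RInt (fun s => G (fst f s) (snd f s)) 0 t.

Lemma picard_step_0 G v0 f : picard_step G v0 f 0 = v0.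
Proof. unfold picard_step. rewrite RInt_point. apply Rplus_0_r. Qed.

Lemma picard_step_lipschitz G L M K v0 f : 0 <= L -> lipschitz2 L G ->
  (forall x y, Rabs (G x y) <= M) -> lipschitz_pair K f ->
  lipschitz M (picard_step G v0 f).
Proof.
  intros HL HG HM [Hf1 Hf2]. apply (lipschitz_primitive (L * (K + K))); [|auto].
  now apply lipschitz_comp2.
Qed.

Lemma picard_step_derive G L K v0 f t : 0 <= L -> lipschitz2 L G -> lipschitz_pair K f ->
  is_derive (picard_step G v0 f) t (G (fst f t) (snd f t)).
Proof.
  intros HL HG [Hf1 Hf2].
  assert (Hh : lipschitz (L * (K + K)) (fun s => G (fst f s) (snd f s)))
    by now apply lipschitz_comp2.
  unfold picard_step. replace (G (fst f t) (snd f t)) with (plus zero (G (fst f t) (snd f t)))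
    by apply plus_zero_l.
  apply (is_derive_plus (K := R_AbsRing) (V := R_NormedModule) (fun _ => v0)
           (fun b => RInt (fun s => G (fst f s) (snd f s)) 0 b)).
  - exact (is_derive_const (K := R_AbsRing) (V := R_NormedModule) v0 t).
  - apply (is_derive_RInt (V := R_CompleteNormedModule) (fun s => G (fst f s) (snd f s)) _ 0).
    + apply filter_forall. intros b. apply (RInt_correct (V := R_CompleteNormedModule)).
      eapply lipschitz_ex_RInt, Hh.
    + eapply lipschitz_continuous, Hh.
Qed.

Lemma RInt_exp_weight L C t : 0 < L ->
  RInt (fun s => L * C * exp (4 * L * s)) 0 t = C * (exp (4 * L * t) - 1) / 4.
Proof.
  intros HL. apply is_RInt_unique.
  replace (C * (exp (4 * L * t) - 1) / 4) with (C * exp (4 * L * t) / 4 - C * exp (4 * L * 0) / 4)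
    by (rewrite Rmult_0_r, exp_0; field).
  apply (is_RInt_derive (V := R_CompleteNormedModule) (fun s => C * exp (4 * L * s) / 4)).
  - intros x _. auto_derive; [auto | field].
  - intros x _. apply (ex_derive_continuous (V := R_NormedModule)). auto_derive. auto.
Qed.

Lemma picard_step_gap G L K C v0 f g t : 0 < L -> 0 <= t -> lipschitz2 L G ->
  lipschitz_pair K f -> lipschitz_pair K g ->
  (forall s, 0 <= s -> pair_dist f g s <= C * exp (4 * L * s)) ->
  Rabs (picard_step G v0 f t - picard_step G v0 g t) <= C * (exp (4 * L * t) - 1) / 4.
Proof.
  intros HL Ht HG [Hf1 Hf2] [Hg1 Hg2] Hfg. unfold picard_step.
  set (hf := fun s => G (fst f s) (snd f s)). set (hg := fun s => G (fst g s) (snd g s)).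
  assert (Hhf : lipschitz (L * (K + K)) hf) by (apply lipschitz_comp2; auto; lra).
  assert (Hhg : lipschitz (L * (K + K)) hg) by (apply lipschitz_comp2; auto; lra).
  assert (Hd := lipschitz_minus _ _ _ _ Hhf Hhg).
  replace (v0 + RInt hf 0 t - (v0 + RInt hg 0 t)) with (RInt hf 0 t - RInt hg 0 t) by ring.
  rewrite <- (RInt_minus (V := R_CompleteNormedModule) hf hg)
    by (eapply lipschitz_ex_RInt; eassumption).
  eapply Rle_trans; [apply abs_RInt_le; [exact Ht | eapply lipschitz_ex_RInt, Hd]|].
  rewrite <- RInt_exp_weight by exact HL.
  apply RInt_le; [exact Ht | eapply lipschitz_ex_RInt, lipschitz_abs, Hd | |].
  - apply (ex_RInt_continuous (V := R_CompleteNormedModule)). intros z _.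
    apply (ex_derive_continuous (V := R_NormedModule)). auto_derive. auto.
  - intros s Hs. rewrite Rmult_assoc. eapply Rle_trans; [apply HG|].
    apply Rmult_le_compat_l; [lra|]. apply Hfg. lra.
Qed.

Section Picard.

Variables (G1 G2 : R -> R -> R) (x0 y0 L M : R).
Hypotheses (HL : 0 < L) (HM : 0 < M) (HG1 : lipschitz2 L G1) (HG2 : lipschitz2 L G2)
  (HB1 : forall x y, Rabs (G1 x y) <= M) (HB2 : forall x y, Rabs (G2 x y) <= M).

Fixpoint picard (k : nat) : (R -> R) * (R -> R) :=
  match k with
  | O => (fun _ => x0, fun _ => y0)
  | S k => (picard_step G1 x0 (picard k), picard_step G2 y0 (picard k))
  end.

Lemma picard_lipschitz k : lipschitz_pair M (picard k).
Proof.
  induction k as [|k IH].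
  - split; intros s t; simpl; rewrite Rminus_eq_0, Rabs_R0;
      apply Rmult_le_pos; (lra || apply Rabs_pos).
  - split; eapply picard_step_lipschitz; eauto; lra.
Qed.

(* With the weight [exp (4 L s)] each step halves the distance: two components, each
   [L]-Lipschitz, integrated against [exp (4 L s)] give a factor [2 L / (4 L)]. *)
Lemma picard_successive_gap k t : 0 <= t ->
  pair_dist (picard (S k)) (picard k) t <= M / (2 * L) * (/ 2) ^ k * exp (4 * L * t).
Proof.
  revert t. induction k as [|k IH]; intros t Ht.
  - destruct (picard_lipschitz 1) as [P1 P2].
    specialize (P1 t 0). specialize (P2 t 0).
    change (fst (picard 1) 0) with (picard_step G1 x0 (picard 0) 0) in P1.
    change (snd (picard 1) 0) with (picard_step G2 y0 (picard 0) 0) in P2.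
    rewrite picard_step_0, Rminus_0_r, (Rabs_right t) in P1, P2 by lra.
    unfold pair_dist. change (fst (picard 0) t) with x0. change (snd (picard 0) t) with y0.
    pose proof (exp_ineq1_le (4 * L * t)).
    replace (M / (2 * L) * (/ 2) ^ 0 * exp (4 * L * t))
      with (M * t + M * t + M / (2 * L) * (exp (4 * L * t) - 4 * L * t)) by (simpl; field; lra).
    assert (0 <= M / (2 * L) * (exp (4 * L * t) - 4 * L * t))
      by (apply Rmult_le_pos; [apply Rlt_le, Rdiv_lt_0_compat |]; lra).
    lra.
  - set (C := M / (2 * L) * (/ 2) ^ k).
    pose proof (picard_step_gap G1 L M C x0 (picard (S k)) (picard k) t HL Ht HG1
                  (picard_lipschitz _) (picard_lipschitz _) IH) as E1.
    pose proof (picard_step_gap G2 L M C y0 (picard (S k)) (picard k) t HL Ht HG2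
                  (picard_lipschitz _) (picard_lipschitz _) IH) as E2.
    unfold pair_dist. change (fst (picard (S (S k))) t) with (picard_step G1 x0 (picard (S k)) t).
    change (snd (picard (S (S k))) t) with (picard_step G2 y0 (picard (S k)) t).
    change (fst (picard (S k)) t) with (picard_step G1 x0 (picard k) t).
    change (snd (picard (S k)) t) with (picard_step G2 y0 (picard k) t).
    replace (M / (2 * L) * (/ 2) ^ S k * exp (4 * L * t))
      with (C * (exp (4 * L * t) - 1) / 4 + C * (exp (4 * L * t) - 1) / 4 + C / 2)
      by (unfold C; simpl; field; lra).
    assert (0 <= C) by (apply Rmult_le_pos; [apply Rlt_le, Rdiv_lt_0_compat | apply pow_le]; lra).
    lra.
Qed.

Lemma picard_gap k m t : 0 <= t ->
  pair_dist (picard (m + k)) (picard k) t <=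
  M / L * ((/ 2) ^ k - (/ 2) ^ (m + k)) * exp (4 * L * t).
Proof.
  intros Ht. induction m as [|m IH].
  - unfold pair_dist. simpl. rewrite !Rminus_eq_0, Rabs_R0. lra.
  - change (S m + k)%nat with (S (m + k)).
    eapply Rle_trans; [apply (dist2_triangle _ (picard (m + k)))|].
    pose proof (picard_successive_gap (m + k) t Ht).
    replace (M / L * ((/ 2) ^ k - (/ 2) ^ S (m + k)) * exp (4 * L * t))
      with (M / (2 * L) * (/ 2) ^ (m + k) * exp (4 * L * t)
            + M / L * ((/ 2) ^ k - (/ 2) ^ (m + k)) * exp (4 * L * t))
      by (simpl; field; lra).
    lra.
Qed.

Lemma picard_gap_le k m t : 0 <= t -> (k <= m)%nat ->
  pair_dist (picard m) (picard k) t <= M / L * (/ 2) ^ k * exp (4 * L * t).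
Proof.
  intros Ht Hkm. replace m with ((m - k) + k)%nat by lia.
  eapply Rle_trans; [apply picard_gap, Ht|].
  assert (0 <= M / L * (/ 2) ^ (m - k + k) * exp (4 * L * t)).
  { apply Rmult_le_pos; [apply Rmult_le_pos; [apply Rlt_le, Rdiv_lt_0_compat | apply pow_le] |
                         apply Rlt_le, exp_pos]; lra. }
  replace (M / L * (/ 2) ^ k * exp (4 * L * t))
    with (M / L * ((/ 2) ^ k - (/ 2) ^ (m - k + k)) * exp (4 * L * t)
          + M / L * (/ 2) ^ (m - k + k) * exp (4 * L * t)) by ring.
  lra.
Qed.

Definition picard_limit : (R -> R) * (R -> R) :=
  (fun t => real (Lim_seq (fun k => fst (picard k) (Rmax 0 t))),
   fun t => real (Lim_seq (fun k => snd (picard k) (Rmax 0 t)))).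

Lemma picard_limit_is_lim t :
  is_lim_seq (fun k => fst (picard k) (Rmax 0 t)) (fst picard_limit t) /\
  is_lim_seq (fun k => snd (picard k) (Rmax 0 t)) (snd picard_limit t).
Proof.
  set (B := M / L * exp (4 * L * Rmax 0 t)).
  assert (Hgap : forall k m, (k <= m)%nat ->
                   pair_dist (picard m) (picard k) (Rmax 0 t) <= B * (/ 2) ^ k).
  { intros k m Hkm. unfold B. rewrite Rmult_assoc, (Rmult_comm (exp _)), <- Rmult_assoc.
    apply picard_gap_le; [apply Rmax_l | exact Hkm]. }
  split; apply (is_lim_seq_of_geometric_gaps _ B); intros k m Hkm;
    specialize (Hgap k m Hkm); unfold pair_dist in Hgap;
    pose proof (Rabs_pos (fst (picard m) (Rmax 0 t) - fst (picard k) (Rmax 0 t)));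
    pose proof (Rabs_pos (snd (picard m) (Rmax 0 t) - snd (picard k) (Rmax 0 t))); lra.
Qed.

Lemma picard_limit_gap k t : 0 <= t ->
  pair_dist picard_limit (picard k) t <= M / L * (/ 2) ^ k * exp (4 * L * t).
Proof.
  intros Ht. destruct (picard_limit_is_lim t) as [Hx Hy]. rewrite Rmax_right in Hx, Hy by lra.
  apply (is_lim_seq_le_const (fun m => pair_dist (picard m) (picard k) t) _ _ k).
  - apply is_lim_seq_plus';
      apply (is_lim_seq_abs _ (_ - _)), is_lim_seq_minus'; (assumption || apply is_lim_seq_const).
  - intros m Hm. now apply picard_gap_le.
Qed.

Lemma Rmax_0_lipschitz s t : Rabs (Rmax 0 s - Rmax 0 t) <= Rabs (s - t).
Proof.
  unfold Rmax. destruct (Rle_dec 0 s), (Rle_dec 0 t); unfold Rabs;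
    repeat destruct Rcase_abs; lra.
Qed.

Lemma picard_limit_lipschitz : lipschitz_pair M picard_limit.
Proof.
  assert (Hcomp : forall (c : (R -> R) * (R -> R) -> R -> R) (l : R -> R) s t,
    (forall t, is_lim_seq (fun k => c (picard k) (Rmax 0 t)) (l t)) ->
    (forall k, lipschitz M (c (picard k))) -> Rabs (l s - l t) <= M * Rabs (s - t)).
  { intros c l s t Hl Hc.
    apply (is_lim_seq_le_const
             (fun k => Rabs (c (picard k) (Rmax 0 s) - c (picard k) (Rmax 0 t))) _ _ 0).
    - apply (is_lim_seq_abs _ (_ - _)), is_lim_seq_minus'; apply Hl.
    - intros k _. eapply Rle_trans; [apply Hc|].
      apply Rmult_le_compat_l; [lra | apply Rmax_0_lipschitz]. }
  split; intros s t.
  - apply (Hcomp fst); [apply picard_limit_is_lim | apply picard_lipschitz].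
  - apply (Hcomp snd); [apply picard_limit_is_lim | apply picard_lipschitz].
Qed.

Lemma picard_limit_fixed_component (c : (R -> R) * (R -> R) -> R -> R) G v0 t :
  lipschitz2 L G ->
  (forall k, c (picard (S k)) = picard_step G v0 (picard k)) ->
  (forall f g s, Rabs (c f s - c g s) <= pair_dist f g s) ->
  0 <= t -> c picard_limit t = picard_step G v0 picard_limit t.
Proof.
  intros HG Hc Hcd Ht. set (e := exp (4 * L * t)).
  apply (eq_of_geometric_bound _ _ (M / L * e)). intros k.
  pose proof (Hcd picard_limit (picard (S k)) t) as H1.
  pose proof (picard_limit_gap (S k) t Ht) as H2.
  pose proof (picard_step_gap G L M (M / L * (/ 2) ^ k) v0 picard_limit (picard k) t HL Ht HG
                picard_limit_lipschitz (picard_lipschitz k)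
                (fun s Hs => picard_limit_gap k s Hs)) as H3.
  rewrite Hc in H1.
  pose proof (Rabs_triang (c picard_limit t - picard_step G v0 (picard k) t)
                          (picard_step G v0 (picard k) t - picard_step G v0 picard_limit t)) as H4.
  rewrite (Rabs_minus_sym (picard_step G v0 (picard k) t)) in H4.
  replace (c picard_limit t - picard_step G v0 (picard k) t +
           (picard_step G v0 (picard k) t - picard_step G v0 picard_limit t))
    with (c picard_limit t - picard_step G v0 picard_limit t) in H4 by ring.
  fold e in H2, H3.
  assert (0 <= M / L * (/ 2) ^ k * e).
  { apply Rmult_le_pos; [apply Rmult_le_pos; [apply Rlt_le, Rdiv_lt_0_compat | apply pow_le] |
                         apply Rlt_le, exp_pos]; lra. }
  replace (M / L * (/ 2) ^ S k * e) with (M / L * (/ 2) ^ k * e / 2) in H2 by (simpl; field; lra).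
  replace (M / L * (/ 2) ^ k * (e - 1) / 4) with (M / L * (/ 2) ^ k * e / 4 - M / L * (/ 2) ^ k / 4)
    in H3 by (field; lra).
  assert (0 <= M / L * (/ 2) ^ k / 4).
  { apply Rmult_le_pos; [apply Rmult_le_pos; [apply Rlt_le, Rdiv_lt_0_compat | apply pow_le] |];
      lra. }
  replace (M / L * e * (/ 2) ^ k) with (M / L * (/ 2) ^ k * e) by ring.
  lra.
Qed.

Lemma picard_limit_integral t : 0 <= t ->
  fst picard_limit t = picard_step G1 x0 picard_limit t /\
  snd picard_limit t = picard_step G2 y0 picard_limit t.
Proof.
  intros Ht.
  assert (Hfst : forall f g s, Rabs (fst f s - fst g s) <= pair_dist f g s).
  { intros f g s. unfold pair_dist. pose proof (Rabs_pos (snd f s - snd g s)). lra. }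
  assert (Hsnd : forall f g s, Rabs (snd f s - snd g s) <= pair_dist f g s).
  { intros f g s. unfold pair_dist. pose proof (Rabs_pos (fst f s - fst g s)). lra. }
  split; apply picard_limit_fixed_component; auto.
Qed.

Theorem picard_limit_solution :
  fst picard_limit 0 = x0 /\ snd picard_limit 0 = y0 /\ lipschitz_pair M picard_limit /\
  forall t, 0 < t ->
    is_derive (fst picard_limit) t (G1 (fst picard_limit t) (snd picard_limit t)) /\
    is_derive (snd picard_limit) t (G2 (fst picard_limit t) (snd picard_limit t)).
Proof.
  destruct (picard_limit_integral 0 (Rle_refl 0)) as [E1 E2].
  rewrite picard_step_0 in E1, E2.
  split; [exact E1|]. split; [exact E2|]. split; [exact picard_limit_lipschitz|].
  intros t Ht.
  assert (Hnear : locally t (fun s => 0 <= s)).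
  { apply (filter_imp (fun s => 0 < s)); [intros; lra | exact (open_gt 0 t Ht)]. }
  split.
  - apply (is_derive_ext_loc (picard_step G1 x0 picard_limit)).
    + apply (filter_imp _ _ (fun s Hs => eq_sym (proj1 (picard_limit_integral s Hs))) Hnear).
    + apply (picard_step_derive _ L M); [lra | exact HG1 | exact picard_limit_lipschitz].
  - apply (is_derive_ext_loc (picard_step G2 y0 picard_limit)).
    + apply (filter_imp _ _ (fun s Hs => eq_sym (proj2 (picard_limit_integral s Hs))) Hnear).
    + apply (picard_step_derive _ L M); [lra | exact HG2 | exact picard_limit_lipschitz].
Qed.

End Picard.

(** * Planar autonomous systems: uniqueness and maximal solutions *)

Definition ode_solution (F1 F2 : R -> R -> R) (x0 y0 T : R) (u w : R -> R) : Prop :=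
  u 0 = x0 /\ w 0 = y0 /\
  filterlim u (at_right 0) (locally x0) /\ filterlim w (at_right 0) (locally y0) /\
  forall t, 0 < t < T -> is_derive u t (F1 (u t) (w t)) /\ is_derive w t (F2 (u t) (w t)).

Lemma ode_solution_restrict F1 F2 x0 y0 T T' u w :
  T' <= T -> ode_solution F1 F2 x0 y0 T u w -> ode_solution F1 F2 x0 y0 T' u w.
Proof.
  intros HT (U0 & W0 & CU & CW & D).
  split; [exact U0|]. split; [exact W0|]. split; [exact CU|]. split; [exact CW|].
  intros t Ht. apply D. lra.
Qed.

Lemma filterlim_sq_diff {T : Type} {F : (T -> Prop) -> Prop} {FF : Filter F} (u v : T -> R) a :
  filterlim u F (locally a) -> filterlim v F (locally a) ->
  filterlim (fun s => (u s - v s) ^ 2) F (locally 0).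
Proof.
  intros Hu Hv.
  assert (Hd := filterlim_lin_comb u v a a 1 (-1) 0 Hu Hv).
  replace (1 * a + -1 * a + 0) with 0 in Hd by ring.
  assert (Hsq : filterlim (fun x : R => x ^ 2) (locally 0) (locally 0)).
  { replace (locally 0) with (locally (0 ^ 2)) at 2 by (f_equal; ring).
    apply (ex_derive_continuous (V := R_NormedModule)). auto_derive. auto. }
  eapply filterlim_ext; [|exact (filterlim_comp _ _ _ _ _ _ _ _ Hd Hsq)].
  intros s. simpl. ring.
Qed.

Lemma lipschitz2_energy a b p q L : 0 <= L ->
  Rabs p <= L * (Rabs a + Rabs b) -> Rabs q <= L * (Rabs a + Rabs b) ->
  a * p + b * q <= 2 * L * (a ^ 2 + b ^ 2).
Proof.
  intros HL Hp Hq.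
  assert (Hap : a * p <= Rabs a * (L * (Rabs a + Rabs b))).
  { eapply Rle_trans; [apply Rle_abs|]. rewrite Rabs_mult.
    apply Rmult_le_compat_l; [apply Rabs_pos | exact Hp]. }
  assert (Hbq : b * q <= Rabs b * (L * (Rabs a + Rabs b))).
  { eapply Rle_trans; [apply Rle_abs|]. rewrite Rabs_mult.
    apply Rmult_le_compat_l; [apply Rabs_pos | exact Hq]. }
  rewrite <- (pow2_abs a), <- (pow2_abs b).
  assert (0 <= L * (Rabs a - Rabs b) ^ 2) by (apply Rmult_le_pos; [lra | apply pow2_ge_0]).
  nra.
Qed.

Lemma weighted_gap_nonincreasing F1 F2 L T u1 w1 u2 w2 : 0 <= L ->
  lipschitz2 L F1 -> lipschitz2 L F2 ->
  (forall t, 0 < t < T -> is_derive u1 t (F1 (u1 t) (w1 t)) /\ is_derive w1 t (F2 (u1 t) (w1 t))) ->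
  (forall t, 0 < t < T -> is_derive u2 t (F1 (u2 t) (w2 t)) /\ is_derive w2 t (F2 (u2 t) (w2 t))) ->
  forall s t, 0 < s <= t -> t < T ->
    ((u1 t - u2 t) ^ 2 + (w1 t - w2 t) ^ 2) * exp (- (4 * L) * t) <=
    ((u1 s - u2 s) ^ 2 + (w1 s - w2 s) ^ 2) * exp (- (4 * L) * s).
Proof.
  intros HL HF1 HF2 D1 D2 s t Hs Ht.
  set (phi := fun s => (u1 s - u2 s) ^ 2 + (w1 s - w2 s) ^ 2).
  set (dpsi := fun s => (2 * (u1 s - u2 s) * (F1 (u1 s) (w1 s) - F1 (u2 s) (w2 s))
                         + 2 * (w1 s - w2 s) * (F2 (u1 s) (w1 s) - F2 (u2 s) (w2 s))
                         - 4 * L * phi s) * exp (- (4 * L) * s)).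
  destruct (mean_value (fun s => phi s * exp (- (4 * L) * s)) dpsi s t) as [c [Hc Hmv]]; [lra| |].
  - intros r Hr. destruct (D1 r ltac:(lra)) as [Du1 Dw1]. destruct (D2 r ltac:(lra)) as [Du2 Dw2].
    unfold dpsi, phi. auto_derive; [repeat split; eexists; eassumption|].
    assert (E : forall (v : R -> R) d, is_derive v r d -> Derive (fun x : R => v x) r = d)
      by (intros v d Hv; now apply is_derive_unique).
    rewrite (E _ _ Du1), (E _ _ Dw1), (E _ _ Du2), (E _ _ Dw2). ring.
  - assert (dpsi c <= 0).
    { unfold dpsi. apply Rmult_le_0_r; [|apply Rlt_le, exp_pos].
      pose proof (lipschitz2_energy (u1 c - u2 c) (w1 c - w2 c) _ _ L HL
                    (HF1 (u1 c) (w1 c) (u2 c) (w2 c)) (HF2 (u1 c) (w1 c) (u2 c) (w2 c))).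
      unfold phi. lra. }
    fold (phi t) (phi s). nra.
Qed.

Lemma ode_solution_unique F1 F2 L x0 y0 T u1 w1 u2 w2 : 0 <= L ->
  lipschitz2 L F1 -> lipschitz2 L F2 ->
  ode_solution F1 F2 x0 y0 T u1 w1 -> ode_solution F1 F2 x0 y0 T u2 w2 ->
  forall t, 0 <= t < T -> u1 t = u2 t /\ w1 t = w2 t.
Proof.
  intros HL HF1 HF2 (U1 & W1 & CU1 & CW1 & D1) (U2 & W2 & CU2 & CW2 & D2) t [Ht0 HtT].
  destruct (Req_dec t 0) as [->|Htn]; [split; congruence|].
  set (phi := fun s => (u1 s - u2 s) ^ 2 + (w1 s - w2 s) ^ 2).
  assert (Hdecay : at_right 0 (fun s => phi t * exp (- (4 * L) * t) <= phi s)).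
  { apply (at_right_0_intro _ t); [lra|]. intros s Hs.
    pose proof (weighted_gap_nonincreasing F1 F2 L T u1 w1 u2 w2 HL HF1 HF2 D1 D2 s t
                  ltac:(lra) HtT) as Hmono.
    assert (Hexp : exp (- (4 * L) * s) <= 1).
    { rewrite <- exp_0. destruct (Rle_lt_or_eq_dec 0 L HL) as [HLp | <-].
      - left. apply exp_increasing. nra.
      - right. f_equal. ring. }
    assert (0 <= phi s) by (unfold phi; pose proof (pow2_ge_0 (u1 s - u2 s));
                            pose proof (pow2_ge_0 (w1 s - w2 s)); lra).
    fold (phi t) (phi s) in Hmono. nra. }
  assert (Hphi0 : filterlim phi (at_right 0) (locally (1 * 0 + 1 * 0 + 0))).
  { eapply filterlim_ext; [|exact (filterlim_lin_comb _ _ 0 0 1 1 0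
      (filterlim_sq_diff u1 u2 x0 CU1 CU2) (filterlim_sq_diff w1 w2 y0 CW1 CW2))].
    intros s. unfold phi. ring. }
  pose proof (filterlim_le (F := at_right 0) (fun _ => phi t * exp (- (4 * L) * t)) phi
                (phi t * exp (- (4 * L) * t)) (1 * 0 + 1 * 0 + 0)
                Hdecay (filterlim_const _) Hphi0) as Hle.
  simpl in Hle. unfold phi in Hle. pose proof (exp_pos (- (4 * L) * t)).
  pose proof (pow2_ge_0 (u1 t - u2 t)). pose proof (pow2_ge_0 (w1 t - w2 t)).
  assert (Hsq : (u1 t - u2 t) ^ 2 = 0 /\ (w1 t - w2 t) ^ 2 = 0) by (split; nra).
  split; apply Rminus_diag_uniq, Rsqr_0_uniq; rewrite Rsqr_pow2; apply Hsq.
Qed.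

Lemma ode_solution_change_field F1 F2 F1' F2' x0 y0 T u w :
  (forall t, 0 < t < T -> F1' (u t) (w t) = F1 (u t) (w t) /\ F2' (u t) (w t) = F2 (u t) (w t)) ->
  ode_solution F1 F2 x0 y0 T u w -> ode_solution F1' F2' x0 y0 T u w.
Proof.
  intros HF (U0 & W0 & CU & CW & D).
  split; [exact U0|]. split; [exact W0|]. split; [exact CU|]. split; [exact CW|].
  intros t Ht. destruct (HF t Ht) as [E1 E2]. rewrite E1, E2. exact (D t Ht).
Qed.

Lemma lipschitz_at_right K f : lipschitz K f -> filterlim f (at_right 0) (locally (f 0)).
Proof.
  intros Hf. apply (filterlim_filter_le_1 _ (filter_le_within _)).
  eapply lipschitz_continuous, Hf.
Qed.

Lemma picard_limit_ode_solution G1 G2 L M x0 y0 T :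
  0 < L -> 0 < M -> lipschitz2 L G1 -> lipschitz2 L G2 ->
  (forall x y, Rabs (G1 x y) <= M) -> (forall x y, Rabs (G2 x y) <= M) ->
  ode_solution G1 G2 x0 y0 T (fst (picard_limit G1 G2 x0 y0)) (snd (picard_limit G1 G2 x0 y0)).
Proof.
  intros HL HM HG1 HG2 HB1 HB2.
  destruct (picard_limit_solution G1 G2 x0 y0 L M) as (X0 & Y0 & [LX LY] & D); auto.
  split; [exact X0|]. split; [exact Y0|].
  split; [rewrite <- X0 at 2; eapply lipschitz_at_right, LX|].
  split; [rewrite <- Y0 at 2; eapply lipschitz_at_right, LY|].
  intros t Ht. apply D, Ht.
Qed.

Definition locally_lipschitz2 (G : R -> R -> R) : Prop :=
  forall r, 0 < r -> exists L, 0 <= L /\ forall x y x' y',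
    Rabs x <= r -> Rabs y <= r -> Rabs x' <= r -> Rabs y' <= r ->
    Rabs (G x y - G x' y') <= L * (Rabs (x - x') + Rabs (y - y')).

Definition clamp (r x : R) : R := Rmax (- r) (Rmin r x).

Lemma clamp_lipschitz r x y : 0 <= r -> Rabs (clamp r x - clamp r y) <= Rabs (x - y).
Proof.
  intros. unfold clamp, Rmax, Rmin.
  repeat destruct Rle_dec; unfold Rabs; repeat destruct Rcase_abs; lra.
Qed.

Lemma clamp_bound r x : 0 <= r -> Rabs (clamp r x) <= r.
Proof.
  intros. unfold clamp, Rmax, Rmin.
  repeat destruct Rle_dec; unfold Rabs; repeat destruct Rcase_abs; lra.
Qed.

Lemma clamp_id r x : Rabs x <= r -> clamp r x = x.
Proof.
  intros H. unfold clamp, Rmax, Rmin. revert H.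
  unfold Rabs. destruct Rcase_abs; repeat destruct Rle_dec; lra.
Qed.

Definition truncate (r : R) (G : R -> R -> R) : R -> R -> R :=
  fun x y => G (clamp r x) (clamp r y).

Lemma truncate_id r G x y : Rabs x <= r -> Rabs y <= r -> truncate r G x y = G x y.
Proof. intros Hx Hy. unfold truncate. now rewrite !clamp_id. Qed.

Lemma truncate_lipschitz2 r G : 0 < r -> locally_lipschitz2 G ->
  exists L M, 0 < L /\ 0 < M /\ lipschitz2 L (truncate r G) /\
    forall x y, Rabs (truncate r G x y) <= M.
Proof.
  intros Hr HG. destruct (HG r Hr) as [L [HL HGL]].
  exists (L + 1), (Rabs (G 0 0) + 2 * L * r + 1).
  assert (Hc : forall x, Rabs (clamp r x) <= r) by (intros; apply clamp_bound; lra).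
  split; [lra|]. split; [pose proof (Rabs_pos (G 0 0)); nra|]. split.
  - intros x y x' y'. unfold truncate. eapply Rle_trans; [apply HGL; apply Hc|].
    pose proof (clamp_lipschitz r x x' ltac:(lra)). pose proof (clamp_lipschitz r y y' ltac:(lra)).
    pose proof (Rabs_pos (x - x')). pose proof (Rabs_pos (y - y')).
    pose proof (Rabs_pos (clamp r x - clamp r x')). pose proof (Rabs_pos (clamp r y - clamp r y')).
    nra.
  - intros x y. unfold truncate.
    assert (H0 : Rabs 0 <= r) by (rewrite Rabs_R0; lra).
    pose proof (HGL (clamp r x) (clamp r y) 0 0 (Hc x) (Hc y) H0 H0) as Hb.
    rewrite !Rminus_0_r in Hb. pose proof (Rabs_triang_inv (G (clamp r x) (clamp r y)) (G 0 0)).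
    pose proof (Hc x). pose proof (Hc y).
    assert (L * (Rabs (clamp r x) + Rabs (clamp r y)) <= 2 * L * r) by nra.
    lra.
Qed.

Lemma lipschitz2_mono L L' G : L <= L' -> lipschitz2 L G -> lipschitz2 L' G.
Proof.
  intros HLL HG x y x' y'. eapply Rle_trans; [apply HG|].
  apply Rmult_le_compat_r; [|exact HLL].
  pose proof (Rabs_pos (x - x')). pose proof (Rabs_pos (y - y')). lra.
Qed.

Section TruncatedFlow.

Variables (F1 F2 : R -> R -> R) (x0 y0 : R).
Hypotheses (HF1 : locally_lipschitz2 F1) (HF2 : locally_lipschitz2 F2).

Definition truncated_flow (r : R) : (R -> R) * (R -> R) :=
  picard_limit (truncate r F1) (truncate r F2) x0 y0.

Lemma truncated_flow_spec r : 0 < r ->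
  exists L M, 0 < L /\ lipschitz2 L (truncate r F1) /\ lipschitz2 L (truncate r F2) /\
    0 < M /\ lipschitz_pair M (truncated_flow r) /\
    forall T, ode_solution (truncate r F1) (truncate r F2) x0 y0 T
                (fst (truncated_flow r)) (snd (truncated_flow r)).
Proof.
  intros Hr.
  destruct (truncate_lipschitz2 r F1 Hr HF1) as (L1 & M1 & HL1 & HM1 & HG1 & HB1).
  destruct (truncate_lipschitz2 r F2 Hr HF2) as (L2 & M2 & HL2 & HM2 & HG2 & HB2).
  assert (HG1' : lipschitz2 (L1 + L2) (truncate r F1)) by (apply (lipschitz2_mono L1); lra || auto).
  assert (HG2' : lipschitz2 (L1 + L2) (truncate r F2)) by (apply (lipschitz2_mono L2); lra || auto).
  assert (HB1' : forall x y, Rabs (truncate r F1 x y) <= M1 + M2)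
    by (intros x y; specialize (HB1 x y); lra).
  assert (HB2' : forall x y, Rabs (truncate r F2 x y) <= M1 + M2)
    by (intros x y; specialize (HB2 x y); lra).
  exists (L1 + L2), (M1 + M2).
  split; [lra|]. split; [exact HG1'|]. split; [exact HG2'|]. split; [lra|].
  split.
  - destruct (picard_limit_solution (truncate r F1) (truncate r F2) x0 y0 (L1 + L2) (M1 + M2))
      as (_ & _ & HLip & _); auto; lra.
  - intros T. apply (picard_limit_ode_solution _ _ (L1 + L2) (M1 + M2)); auto; lra.
Qed.

Lemma truncated_flow_agrees r T u w : 0 < r -> ode_solution F1 F2 x0 y0 T u w ->
  (forall s, 0 <= s < T -> Rabs (u s) <= r /\ Rabs (w s) <= r) ->
  forall s, 0 <= s < T -> fst (truncated_flow r) s = u s /\ snd (truncated_flow r) s = w s.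
Proof.
  intros Hr Hsol Hbox.
  destruct (truncated_flow_spec r Hr) as (L & M & HL & HG1 & HG2 & _ & _ & Hflow).
  apply (ode_solution_unique (truncate r F1) (truncate r F2) L x0 y0 T); auto; [lra|].
  apply (ode_solution_change_field F1 F2); [|exact Hsol].
  intros t Ht. destruct (Hbox t ltac:(lra)). split; now apply truncate_id.
Qed.

Lemma truncated_flow_extends r : 0 < r -> exists h, 0 < h /\ forall T0, 0 <= T0 ->
  (forall s, 0 <= s <= T0 -> Rabs (fst (truncated_flow r) s) <= r - 1 /\
                             Rabs (snd (truncated_flow r) s) <= r - 1) ->
  ode_solution F1 F2 x0 y0 (T0 + h) (fst (truncated_flow r)) (snd (truncated_flow r)).
Proof.
  intros Hr. destruct (truncated_flow_spec r Hr) as (L & M & _ & _ & _ & HM & [LX LY] & Hflow).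
  exists (/ M). split; [now apply Rinv_0_lt_compat|]. intros T0 HT0 Hbox.
  (* An [M]-Lipschitz path needs time at least [1 / M] to travel a distance [1]. *)
  assert (Hin : forall s, 0 <= s < T0 + / M ->
    Rabs (fst (truncated_flow r) s) <= r /\ Rabs (snd (truncated_flow r) s) <= r).
  { intros s Hs. destruct (Rle_or_lt s T0) as [HsT|HsT]; [destruct (Hbox s); lra|].
    destruct (Hbox T0 ltac:(lra)) as [B1 B2].
    pose proof (LX s T0) as C1. pose proof (LY s T0) as C2.
    rewrite (Rabs_right (s - T0)) in C1, C2 by lra.
    assert (M * (s - T0) <= 1).
    { apply Rmult_le_reg_r with (/ M); [now apply Rinv_0_lt_compat|].
      rewrite Rmult_1_l, Rmult_comm, <- Rmult_assoc, Rinv_l, Rmult_1_l by lra. lra. }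
    pose proof (Rabs_triang_inv (fst (truncated_flow r) s) (fst (truncated_flow r) T0)).
    pose proof (Rabs_triang_inv (snd (truncated_flow r) s) (snd (truncated_flow r) T0)).
    split; lra. }
  apply (ode_solution_change_field (truncate r F1) (truncate r F2)); [|apply Hflow].
  intros t Ht. destruct (Hin t ltac:(lra)). split; symmetry; now apply truncate_id.
Qed.

End TruncatedFlow.

Lemma ode_solution_bounded F1 F2 x0 y0 T u w t : ode_solution F1 F2 x0 y0 T u w -> 0 <= t < T ->
  exists B, forall s, 0 <= s <= t -> Rabs (u s) <= B /\ Rabs (w s) <= B.
Proof.
  intros (U0 & W0 & CU & CW & D) Ht.
  set (B0 := Rabs x0 + Rabs y0 + 1).
  assert (HB0 : 0 < B0) by (unfold B0; pose proof (Rabs_pos x0); pose proof (Rabs_pos y0); lra).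
  assert (Hball : forall z, locally z (fun y => Rabs (y - z) < 1)).
  { intros z. exists (mkposreal 1 Rlt_0_1). intros y Hy. exact Hy. }
  destruct (at_right_0_elim (fun s => Rabs (u s) <= B0 /\ Rabs (w s) <= B0)) as [d [Hd Hnear]].
  { apply (filter_imp (fun s => Rabs (u s - x0) < 1 /\ Rabs (w s - y0) < 1)).
    - intros s [Hu Hw].
      pose proof (Rabs_triang_inv (u s) x0). pose proof (Rabs_triang_inv (w s) y0).
      pose proof (Rabs_pos x0). pose proof (Rabs_pos y0). unfold B0. split; lra.
    - apply filter_and; [exact (CU _ (Hball x0)) | exact (CW _ (Hball y0))]. }
  assert (Hsmall : forall s, 0 <= s <= d / 2 -> Rabs (u s) <= B0 /\ Rabs (w s) <= B0).
  { intros s Hs. destruct (Req_dec s 0) as [->|Hs0]; [|apply Hnear; lra].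
    rewrite U0, W0. pose proof (Rabs_pos x0). pose proof (Rabs_pos y0). unfold B0. split; lra. }
  destruct (Rle_or_lt t (d / 2)) as [Htd|Htd].
  { exists B0. intros s Hs. apply Hsmall. lra. }
  assert (Hcont : forall c, d / 2 <= c <= t ->
            continuity_pt (fun s => Rabs (u s)) c /\ continuity_pt (fun s => Rabs (w s)) c).
  { intros c Hc. destruct (D c ltac:(lra)) as [Du Dw].
    split; apply (continuity_pt_comp _ Rabs); try apply Rcontinuity_abs;
      apply continuity_pt_filterlim; eapply is_derive_continuous; eassumption. }
  destruct (continuity_ab_maj (fun s => Rabs (u s)) (d / 2) t) as [mu [Hmu _]];
    [lra | intros c Hc; apply Hcont, Hc|].
  destruct (continuity_ab_maj (fun s => Rabs (w s)) (d / 2) t) as [mw [Hmw _]];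
    [lra | intros c Hc; apply Hcont, Hc|].
  exists (B0 + Rabs (u mu) + Rabs (w mw)). intros s Hs.
  pose proof (Rabs_pos (u mu)). pose proof (Rabs_pos (w mw)).
  destruct (Rle_or_lt s (d / 2)) as [Hsd|Hsd].
  - destruct (Hsmall s ltac:(lra)). split; lra.
  - specialize (Hmu s ltac:(lra)). specialize (Hmw s ltac:(lra)). simpl in Hmu, Hmw. split; lra.
Qed.

Section MaximalSolution.

Variables (F1 F2 : R -> R -> R) (x0 y0 : R).
Hypotheses (HF1 : locally_lipschitz2 F1) (HF2 : locally_lipschitz2 F2).

Definition flow_radius (n : nat) : R := INR n + Rabs x0 + Rabs y0 + 1.

Lemma flow_radius_pos n : 0 < flow_radius n.
Proof.
  unfold flow_radius. pose proof (pos_INR n). pose proof (Rabs_pos x0). pose proof (Rabs_pos y0).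
  lra.
Qed.

(* At each time the sequence is eventually constant: for large radii the truncated flow
   agrees with any solution living past that time. *)
Definition maximal_flow : (R -> R) * (R -> R) :=
  (fun t => real (Lim_seq (fun n => fst (truncated_flow F1 F2 x0 y0 (flow_radius n)) t)),
   fun t => real (Lim_seq (fun n => snd (truncated_flow F1 F2 x0 y0 (flow_radius n)) t))).

Lemma maximal_flow_agrees T u w : ode_solution F1 F2 x0 y0 T u w ->
  forall t, 0 <= t < T -> fst maximal_flow t = u t /\ snd maximal_flow t = w t.
Proof.
  intros Hsol t Ht. set (T' := (t + T) / 2).
  destruct (ode_solution_bounded F1 F2 x0 y0 T u w T' Hsol) as [B HB]; [unfold T'; lra|].
  destruct (INR_unbounded B) as [N HN].
  assert (Hev : forall n, (N <= n)%nat ->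
    fst (truncated_flow F1 F2 x0 y0 (flow_radius n)) t = u t /\
    snd (truncated_flow F1 F2 x0 y0 (flow_radius n)) t = w t).
  { intros n Hn.
    apply (truncated_flow_agrees F1 F2 x0 y0 HF1 HF2 _ T'); [apply flow_radius_pos | | |].
    - apply (ode_solution_restrict _ _ _ _ T); [unfold T'; lra | exact Hsol].
    - intros s Hs. destruct (HB s ltac:(lra)). pose proof (le_INR _ _ Hn).
      pose proof (Rabs_pos x0). pose proof (Rabs_pos y0). unfold flow_radius. split; lra.
    - unfold T'; lra. }
  unfold maximal_flow. simpl. split.
  - rewrite (Lim_seq_ext_loc _ (fun _ => u t)), Lim_seq_const; [reflexivity|].
    exists N. intros n Hn. apply Hev, Hn.
  - rewrite (Lim_seq_ext_loc _ (fun _ => w t)), Lim_seq_const; [reflexivity|].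
    exists N. intros n Hn. apply Hev, Hn.
Qed.

Lemma maximal_flow_solution Tm : 0 < Tm ->
  (forall t, 0 < t < Tm -> exists T u w, t < T /\ ode_solution F1 F2 x0 y0 T u w) ->
  ode_solution F1 F2 x0 y0 Tm (fst maximal_flow) (snd maximal_flow).
Proof.
  intros HTm Hex.
  destruct (Hex (Tm / 2) ltac:(lra)) as (T0 & u0 & w0 & HT0 & Hsol0).
  assert (Hnear0 : at_right 0 (fun s => u0 s = fst maximal_flow s /\ w0 s = snd maximal_flow s)).
  { apply (at_right_0_intro _ T0); [lra|]. intros s Hs.
    destruct (maximal_flow_agrees _ _ _ Hsol0 s ltac:(lra)). auto. }
  destruct (maximal_flow_agrees _ _ _ Hsol0 0 ltac:(lra)) as [E1 E2].
  destruct Hsol0 as (U0 & W0 & CU & CW & _).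
  split; [congruence|]. split; [congruence|].
  split; [eapply filterlim_ext_loc; [|exact CU];
          eapply filter_imp; [|exact Hnear0]; intros s []; auto|].
  split; [eapply filterlim_ext_loc; [|exact CW];
          eapply filter_imp; [|exact Hnear0]; intros s []; auto|].
  intros t Ht. destruct (Hex t Ht) as (T & u & w & HtT & Hsol).
  assert (Hloc : locally t (fun s => u s = fst maximal_flow s /\ w s = snd maximal_flow s)).
  { apply (filter_imp (fun s => 0 < s /\ s < T));
      [|apply filter_and; [apply open_gt | apply open_lt]; lra].
    intros s Hs. destruct (maximal_flow_agrees _ _ _ Hsol s ltac:(lra)). auto. }
  destruct (maximal_flow_agrees _ _ _ Hsol t ltac:(lra)) as [E3 E4]. rewrite E3, E4.
  destruct Hsol as (_ & _ & _ & _ & D). destruct (D t ltac:(lra)) as [Du Dw].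
  split; eapply is_derive_ext_loc; try eassumption;
    eapply filter_imp; try exact Hloc; intros s []; auto.
Qed.

Lemma maximal_flow_unbounded Tm : 0 < Tm ->
  (forall T u w, 0 < T -> ode_solution F1 F2 x0 y0 T u w -> T <= Tm) ->
  ode_solution F1 F2 x0 y0 Tm (fst maximal_flow) (snd maximal_flow) ->
  forall K, exists t, 0 < t < Tm /\ K < Rabs (fst maximal_flow t) + Rabs (snd maximal_flow t).
Proof.
  intros HTm Hmax Hsol K. apply NNPP. intros Hn.
  set (u := fst maximal_flow) in *. set (w := snd maximal_flow) in *.
  destruct (INR_unbounded (Rabs K)) as [n HnK]. set (r := flow_radius n).
  (* A solution staying bounded up to [Tm] is a truncated flow, which lives longer. *)
  assert (Hbox : forall t, 0 <= t < Tm -> Rabs (u t) <= r - 1 /\ Rabs (w t) <= r - 1).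
  { intros t Ht. pose proof (Rabs_pos (u t)). pose proof (Rabs_pos (w t)). pose proof (Rle_abs K).
    pose proof (Rabs_pos x0). pose proof (Rabs_pos y0). pose proof (pos_INR n).
    unfold r, flow_radius.
    destruct (Req_dec t 0) as [->|Ht0].
    - destruct Hsol as (U0 & W0 & _). rewrite U0, W0. split; lra.
    - assert (Rabs (u t) + Rabs (w t) <= K).
      { apply Rnot_lt_le. intros Hlt. apply Hn. exists t. split; [lra | exact Hlt]. }
      split; lra. }
  assert (Hagree := truncated_flow_agrees F1 F2 x0 y0 HF1 HF2 r Tm u w (flow_radius_pos n) Hsol
                      ltac:(intros s Hs; destruct (Hbox s Hs); split; lra)).
  destruct (truncated_flow_extends F1 F2 x0 y0 HF1 HF2 r (flow_radius_pos n)) as [h [Hh Hext]].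
  assert (Hmin : 0 < Rmin Tm h /\ Rmin Tm h <= Tm /\ Rmin Tm h <= h)
    by (split; [apply Rmin_case | split; [apply Rmin_l | apply Rmin_r]]; lra).
  set (T0 := Tm - Rmin Tm h / 2).
  assert (Hlong := Hext T0 ltac:(unfold T0; lra)).
  assert (T0 + h <= Tm).
  { eapply Hmax; [unfold T0; lra | apply Hlong]. intros s Hs. unfold T0 in Hs.
    destruct (Hagree s ltac:(lra)) as [A1 A2]. rewrite A1, A2. apply Hbox. lra. }
  unfold T0 in *. lra.
Qed.

Theorem maximal_ode_solution Tb :
  (forall T u w, 0 < T -> ode_solution F1 F2 x0 y0 T u w -> T <= Tb) ->
  exists Tmax, 0 < Tmax /\ ode_solution F1 F2 x0 y0 Tmax (fst maximal_flow) (snd maximal_flow) /\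
    (forall T u w, 0 < T -> ode_solution F1 F2 x0 y0 T u w ->
       T <= Tmax /\ forall t, 0 <= t < T -> u t = fst maximal_flow t /\ w t = snd maximal_flow t) /\
    (forall K, exists t, 0 < t < Tmax /\ K < Rabs (fst maximal_flow t) + Rabs (snd maximal_flow t)).
Proof.
  intros Hlife.
  set (E := fun T => 0 < T /\ exists u w, ode_solution F1 F2 x0 y0 T u w).
  destruct (truncated_flow_extends F1 F2 x0 y0 HF1 HF2 _ (flow_radius_pos 0)) as [h [Hh Hext]].
  assert (Hsmall : E h).
  { split; [exact Hh|]. do 2 eexists. rewrite <- (Rplus_0_l h). apply Hext; [lra|].
    intros s Hs. replace s with 0 by lra.
    destruct (truncated_flow_spec F1 F2 x0 y0 HF1 HF2 _ (flow_radius_pos 0))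
      as (_ & _ & _ & _ & _ & _ & _ & Hflow).
    destruct (Hflow 0) as (X0 & Y0 & _). rewrite X0, Y0.
    pose proof (Rabs_pos x0). pose proof (Rabs_pos y0). unfold flow_radius. simpl. split; lra. }
  destruct (completeness E) as [Tm [Hub Hlub]].
  { exists Tb. intros T (HT & u & w & Hsol). eapply Hlife; eauto. }
  { exists h. exact Hsmall. }
  assert (HTm : 0 < Tm) by (apply Rlt_le_trans with h; [exact Hh | apply Hub, Hsmall]).
  assert (Hmax : forall T u w, 0 < T -> ode_solution F1 F2 x0 y0 T u w -> T <= Tm).
  { intros T u w HT Hsol. apply Hub. split; [exact HT|]. eauto. }
  assert (Hsol : ode_solution F1 F2 x0 y0 Tm (fst maximal_flow) (snd maximal_flow)).
  { apply maximal_flow_solution; [exact HTm|]. intros t Ht. apply NNPP. intros Hn.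
    assert (Ht_ub : is_upper_bound E t).
    { intros T (HT & u & w & Hs). apply Rnot_lt_le. intros HtT. apply Hn. exists T, u, w. auto. }
    specialize (Hlub t Ht_ub). lra. }
  exists Tm. split; [exact HTm|]. split; [exact Hsol|]. split.
  - intros T u w HT Hs. split; [exact (Hmax T u w HT Hs)|].
    intros t Ht. destruct (maximal_flow_agrees T u w Hs t Ht). auto.
  - now apply maximal_flow_unbounded.
Qed.

End MaximalSolution.

Lemma filterlim_p_infty_of_unbounded (N : R -> R) Tmax C :
  (forall t, 0 <= N t) ->
  (forall K, exists t, 0 < t < Tmax /\ K < N t) ->
  (forall t1 t2, 0 < t1 -> t1 <= t2 -> t2 < Tmax -> N t1 <= C * N t2) ->
  filterlim N (at_left Tmax) (Rbar_locally p_infty).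
Proof.
  intros Hpos Hunb Hmono P [K HP].
  destruct (Hunb (Rabs C * (Rabs K + 1))) as [t2 [Ht2 Hbig]].
  exists (mkposreal (Tmax - t2) ltac:(lra)). intros y Hy Hlt. change R in y.
  change (Rabs (y - Tmax) < Tmax - t2) in Hy. apply Rabs_def2 in Hy.
  apply HP. pose proof (Hmono t2 y ltac:(lra) ltac:(lra) ltac:(lra)) as Hc.
  pose proof (Hpos y). pose proof (Rabs_pos K). pose proof (Rle_abs K). pose proof (Rabs_pos C).
  destruct (Rle_or_lt C 0) as [HC|HC]; [nra|].
  rewrite Rabs_right in Hbig by lra. nra.
Qed.

Definition locally_lipschitz (f : R -> R) : Prop :=
  forall r, 0 < r -> exists L, 0 <= L /\ forall x x',
    Rabs x <= r -> Rabs x' <= r -> Rabs (f x - f x') <= L * Rabs (x - x').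

Lemma globally_lipschitz_locally f : globally_lipschitz f -> locally_lipschitz f.
Proof.
  intros [K HK] r _. exists (Rabs K). split; [apply Rabs_pos|]. intros x x' _ _.
  eapply Rle_trans; [apply HK|]. apply Rmult_le_compat_r; [apply Rabs_pos | apply Rle_abs].
Qed.

Lemma locally_lipschitz_id : locally_lipschitz (fun x => x).
Proof. intros r _. exists 1. split; [lra|]. intros. lra. Qed.

Lemma locally_lipschitz2_fst f : locally_lipschitz f -> locally_lipschitz2 (fun x _ => f x).
Proof.
  intros Hf r Hr. destruct (Hf r Hr) as [L [HL Hfl]]. exists L. split; [exact HL|].
  intros x y x' y' Hx _ Hx' _. eapply Rle_trans; [now apply Hfl|].
  pose proof (Rabs_pos (y - y')). nra.
Qed.

Lemma locally_lipschitz2_snd f : locally_lipschitz f -> locally_lipschitz2 (fun _ y => f y).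
Proof.
  intros Hf r Hr. destruct (Hf r Hr) as [L [HL Hfl]]. exists L. split; [exact HL|].
  intros x y x' y' _ Hy _ Hy'. eapply Rle_trans; [now apply Hfl|].
  pose proof (Rabs_pos (x - x')). nra.
Qed.

Lemma locally_lipschitz2_plus G H :
  locally_lipschitz2 G -> locally_lipschitz2 H -> locally_lipschitz2 (fun x y => G x y + H x y).
Proof.
  intros HG HH r Hr. destruct (HG r Hr) as [L1 [HL1 HG1]]. destruct (HH r Hr) as [L2 [HL2 HH2]].
  exists (L1 + L2). split; [lra|]. intros x y x' y' Hx Hy Hx' Hy'.
  specialize (HG1 x y x' y' Hx Hy Hx' Hy'). specialize (HH2 x y x' y' Hx Hy Hx' Hy').
  replace (G x y + H x y - (G x' y' + H x' y'))
    with ((G x y - G x' y') + (H x y - H x' y')) by ring.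
  eapply Rle_trans; [apply Rabs_triang|]. lra.
Qed.

Lemma locally_lipschitz2_scal k G :
  locally_lipschitz2 G -> locally_lipschitz2 (fun x y => k * G x y).
Proof.
  intros HG r Hr. destruct (HG r Hr) as [L [HL HGL]]. exists (Rabs k * L).
  split; [apply Rmult_le_pos; [apply Rabs_pos | exact HL]|]. intros x y x' y' Hx Hy Hx' Hy'.
  rewrite <- Rmult_minus_distr_l, Rabs_mult, Rmult_assoc.
  apply Rmult_le_compat_l; [apply Rabs_pos | now apply HGL].
Qed.

Lemma locally_lipschitz2_ext G H :
  (forall x y, G x y = H x y) -> locally_lipschitz2 G -> locally_lipschitz2 H.
Proof.
  intros E HG r Hr. destruct (HG r Hr) as [L [HL HGL]]. exists L. split; [exact HL|].
  intros x y x' y'. rewrite <- !E. now apply HGL.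
Qed.

(** * The two-layer energy balance model *)

Definition spow4 (v : R) : R := Rabs v ^ 3 * v.

Lemma spow4_nonneg v : 0 <= v -> spow4 v = v ^ 4.
Proof. intros H. unfold spow4. rewrite Rabs_right by lra. ring. Qed.

Lemma spow4_nonpos v : v <= 0 -> spow4 v = - (- v) ^ 4.
Proof. intros H. unfold spow4. rewrite Rabs_left1 by lra. ring. Qed.

Lemma spow4_ge v e : 0 < e -> - e <= v -> - e ^ 4 <= spow4 v.
Proof.
  intros He Hv. destruct (Rle_or_lt 0 v).
  - rewrite spow4_nonneg by lra. pose proof (pow_le v 4 H). pose proof (pow_le e 4 ltac:(lra)). lra.
  - rewrite spow4_nonpos by lra. assert ((- v) ^ 4 <= e ^ 4) by (apply pow_incr; lra). lra.
Qed.

Lemma pow4_diff_le a b r : 0 <= a <= r -> 0 <= b <= r ->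
  Rabs (a ^ 4 - b ^ 4) <= 4 * r ^ 3 * Rabs (a - b).
Proof.
  intros Ha Hb.
  replace (a ^ 4 - b ^ 4) with ((a - b) * (a ^ 3 + a ^ 2 * b + a * b ^ 2 + b ^ 3)) by ring.
  rewrite Rabs_mult, Rmult_comm. apply Rmult_le_compat_r; [apply Rabs_pos|].
  assert (a ^ 2 <= r ^ 2) by (apply pow_incr; lra).
  assert (b ^ 2 <= r ^ 2) by (apply pow_incr; lra).
  assert (0 <= a ^ 2) by (apply pow_le; lra). assert (0 <= b ^ 2) by (apply pow_le; lra).
  rewrite Rabs_right by (apply Rle_ge; nra).
  replace (4 * r ^ 3) with (r ^ 2 * r + r ^ 2 * r + r * r ^ 2 + r ^ 2 * r) by ring.
  simpl in *. nra.
Qed.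

Lemma pow4_add_le a b r : 0 <= a <= r -> 0 <= b <= r -> a ^ 4 + b ^ 4 <= r ^ 3 * (a + b).
Proof.
  intros Ha Hb. assert (a ^ 3 <= r ^ 3) by (apply pow_incr; lra).
  assert (b ^ 3 <= r ^ 3) by (apply pow_incr; lra).
  replace (a ^ 4 + b ^ 4) with (a ^ 3 * a + b ^ 3 * b) by ring. nra.
Qed.

Lemma spow4_locally_lipschitz : locally_lipschitz spow4.
Proof.
  intros r Hr. exists (4 * r ^ 3). split; [pose proof (pow_le r 3 ltac:(lra)); lra|].
  intros x y Hx Hy. assert (Hr3 : 0 <= r ^ 3) by (apply pow_le; lra).
  destruct (Rle_or_lt 0 x) as [X|X]; destruct (Rle_or_lt 0 y) as [Y|Y].
  - rewrite !spow4_nonneg by lra. rewrite Rabs_right in Hx, Hy by lra. apply pow4_diff_le; lra.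
  - rewrite spow4_nonneg, spow4_nonpos by lra. rewrite Rabs_right in Hx by lra.
    rewrite Rabs_left in Hy by lra. pose proof (pow4_add_le x (- y) r ltac:(lra) ltac:(lra)).
    pose proof (pow_le x 4 X). pose proof (pow_le (- y) 4 ltac:(lra)).
    rewrite !Rabs_right by lra. nra.
  - rewrite spow4_nonpos, spow4_nonneg by lra. rewrite Rabs_left in Hx by lra.
    rewrite Rabs_right in Hy by lra. pose proof (pow4_add_le (- x) y r ltac:(lra) ltac:(lra)).
    pose proof (pow_le y 4 Y). pose proof (pow_le (- x) 4 ltac:(lra)).
    rewrite Rabs_left1, (Rabs_left (x - y)) by lra. nra.
  - rewrite !spow4_nonpos by lra. rewrite Rabs_left in Hx, Hy by lra.
    replace (- (- x) ^ 4 - - (- y) ^ 4) with (- ((- x) ^ 4 - (- y) ^ 4)) by ring.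
    replace (x - y) with (- ((- x) - (- y))) by ring. rewrite !Rabs_Ropp.
    apply pow4_diff_le; lra.
Qed.

Definition field_a ga lam eps sB q (ba : R -> R) : R -> R -> R :=
  fun x y => rhs_a lam eps sB q ba x y / ga.

Definition field_s gs lam eps sB q (bs : R -> R) : R -> R -> R :=
  fun x y => rhs_s lam eps sB q bs x y / gs.

Lemma field_a_eq ga lam eps sB q ba x y : field_a ga lam eps sB q ba x y =
  (- lam * (x - y) + eps * sB * (spow4 y - 2 * spow4 x) + q * ba x) / ga.
Proof. unfold field_a, rhs_a, spow4, Rdiv. ring. Qed.

Lemma field_s_eq gs lam eps sB q bs x y : field_s gs lam eps sB q bs x y =
  (- lam * (y - x) - sB * spow4 y + eps * sB * spow4 x + q * bs y) / gs.
Proof. unfold field_s, rhs_s, spow4, Rdiv. ring. Qed.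

Lemma is_solution_iff ga gs lam eps sB q ba bs x0 y0 T u w : 0 < ga -> 0 < gs ->
  (is_solution ga gs lam eps sB q ba bs x0 y0 T u w <->
   ode_solution (field_a ga lam eps sB q ba) (field_s gs lam eps sB q bs) x0 y0 T u w).
Proof.
  intros Hga Hgs. unfold is_solution, ode_solution.
  split; intros (U0 & W0 & CU & CW & D); do 4 (split; [assumption|]); intros t Ht.
  - destruct (D t Ht) as (da & ds & Da & Ds & Ea & Es).
    assert (Hdiv : forall g z v : R, 0 < g -> g * z = v -> z = v / g)
      by (intros g z v Hg Hz; rewrite <- Hz; field; lra).
    rewrite (Hdiv ga da _ Hga Ea) in Da. rewrite (Hdiv gs ds _ Hgs Es) in Ds. now split.
  - destruct (D t Ht) as [Da Ds]. do 2 eexists. split; [exact Da|]. split; [exact Ds|].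
    unfold field_a, field_s. split; field; lra.
Qed.

Lemma field_a_locally_lipschitz ga lam eps sB q ba :
  globally_lipschitz ba -> locally_lipschitz2 (field_a ga lam eps sB q ba).
Proof.
  intros Hba.
  apply (locally_lipschitz2_ext (fun x y => / ga * (- lam * x + lam * y + eps * sB * spow4 y
                                                  + - 2 * eps * sB * spow4 x + q * ba x))).
  { intros x y. rewrite field_a_eq. unfold Rdiv. ring. }
  apply locally_lipschitz2_scal.
  repeat apply locally_lipschitz2_plus; apply locally_lipschitz2_scal;
    (apply locally_lipschitz2_fst || apply locally_lipschitz2_snd);
    (apply locally_lipschitz_id || apply spow4_locally_lipschitz ||
     now apply globally_lipschitz_locally).
Qed.

Lemma field_s_locally_lipschitz gs lam eps sB q bs :
  globally_lipschitz bs -> locally_lipschitz2 (field_s gs lam eps sB q bs).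
Proof.
  intros Hbs.
  apply (locally_lipschitz2_ext (fun x y => / gs * (lam * x + - lam * y + - sB * spow4 y
                                                  + eps * sB * spow4 x + q * bs y))).
  { intros x y. rewrite field_s_eq. unfold Rdiv. ring. }
  apply locally_lipschitz2_scal.
  repeat apply locally_lipschitz2_plus; apply locally_lipschitz2_scal;
    (apply locally_lipschitz2_fst || apply locally_lipschitz2_snd);
    (apply locally_lipschitz_id || apply spow4_locally_lipschitz ||
     now apply globally_lipschitz_locally).
Qed.

(* The weight makes both quartic terms of [V = a T_a + T_s] carry the factor [eps - 2]. *)
Definition lyap_weight ga gs eps := (2 + eps) * ga / (4 * gs * eps).
Definition lyap_rate gs sB eps := sB * (eps - 2) / (4 * gs).

Lemma lyapunov_identity ga gs lam eps sB q ba bs x y : 0 < ga -> 0 < gs -> 0 < eps ->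
  lyap_weight ga gs eps * field_a ga lam eps sB q ba x y + field_s gs lam eps sB q bs x y =
  (2 + eps) / (4 * gs * eps) * (- lam * (x - y) + q * ba x) + (- lam * (y - x) + q * bs y) / gs
  + lyap_rate gs sB eps * (spow4 y + 2 * spow4 x).
Proof.
  intros Hga Hgs Heps. rewrite field_a_eq, field_s_eq. unfold lyap_weight, lyap_rate.
  field. lra.
Qed.

Lemma lyap_weight_pos ga gs eps : 0 < ga -> 0 < gs -> 0 < eps -> 0 < lyap_weight ga gs eps.
Proof. intros. unfold lyap_weight. apply Rdiv_lt_0_compat; nra. Qed.

Lemma lyap_rate_pos gs sB eps : 0 < gs -> 0 < sB -> 2 < eps -> 0 < lyap_rate gs sB eps.
Proof. intros. unfold lyap_rate. apply Rdiv_lt_0_compat; nra. Qed.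

Lemma pow4_sum3_le a b c : (a + b + c) ^ 4 <= 27 * (a ^ 4 + b ^ 4 + c ^ 4).
Proof.
  assert (Hsq : forall a b c, (a + b + c) ^ 2 <= 3 * (a ^ 2 + b ^ 2 + c ^ 2)).
  { intros a' b' c'. pose proof (pow2_ge_0 (a' - b')). pose proof (pow2_ge_0 (b' - c')).
    pose proof (pow2_ge_0 (a' - c')). lra. }
  replace ((a + b + c) ^ 4) with (((a + b + c) ^ 2) ^ 2) by ring.
  apply Rle_trans with ((3 * (a ^ 2 + b ^ 2 + c ^ 2)) ^ 2).
  - apply pow_incr. split; [apply pow2_ge_0 | apply Hsq].
  - pose proof (Hsq (a ^ 2) (b ^ 2) (c ^ 2)).
    replace (a ^ 4 + b ^ 4 + c ^ 4) with ((a ^ 2) ^ 2 + (b ^ 2) ^ 2 + (c ^ 2) ^ 2) by ring.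
    replace ((3 * (a ^ 2 + b ^ 2 + c ^ 2)) ^ 2) with (9 * (a ^ 2 + b ^ 2 + c ^ 2) ^ 2) by ring.
    lra.
Qed.

Lemma nonneg_of_forall_small v e0 : 0 < e0 -> (forall e, 0 < e < e0 -> 0 < v + e) -> 0 <= v.
Proof.
  intros He0 H. apply Rnot_lt_le. intros Hv.
  assert (0 < Rmin e0 (- v)) by (apply Rmin_case; lra).
  pose proof (Rmin_l e0 (- v)). pose proof (Rmin_r e0 (- v)).
  specialize (H (Rmin e0 (- v) / 2) ltac:(lra)). lra.
Qed.

Lemma at_right_gt (u : R -> R) x0 c :
  filterlim u (at_right 0) (locally x0) -> c < x0 -> at_right 0 (fun s => c < u s).
Proof. intros Hu Hc. exact (Hu _ (open_gt c x0 Hc)). Qed.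

Lemma coalbedo_ge Tm Tp bm bp x : Tm < Tp -> bm < bp -> bm <= coalbedo Tm Tp bm bp x.
Proof.
  intros HT Hb. unfold coalbedo. destruct Rle_dec; [lra|]. destruct Rle_dec; [lra|].
  assert (0 <= (bp - bm) * (x - Tm) / (Tp - Tm)).
  { apply Rmult_le_pos; [apply Rmult_le_pos | apply Rlt_le, Rinv_0_lt_compat]; lra. }
  lra.
Qed.

Lemma coalbedo_globally_lipschitz Tm Tp bm bp :
  Tm < Tp -> bm < bp -> globally_lipschitz (coalbedo Tm Tp bm bp).
Proof.
  intros HT Hb. set (k := (bp - bm) / (Tp - Tm)).
  assert (Hk : 0 < k) by (apply Rdiv_lt_0_compat; lra).
  assert (E : forall x, (bp - bm) * (x - Tm) / (Tp - Tm) = k * (x - Tm))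
    by (intros; unfold k; field; lra).
  assert (Ebp : bp = bm + k * (Tp - Tm)) by (unfold k; field; lra).
  exists k. intros x y. unfold coalbedo. rewrite !E.
  repeat destruct Rle_dec; unfold Rabs; repeat destruct Rcase_abs; nra.
Qed.

Section Uncoupled.

Variables (ga gs q sB eps Tm Tp bm bp x0 y0 : R).
Hypotheses (Hga : 0 < ga) (Hgs : 0 < gs) (Hq : 0 < q) (HsB : 0 < sB) (HT : Tm < Tp)
  (Hbm : 0 < bm) (Hb : bm < bp) (Heps : 2 < eps) (Hx0 : 0 <= x0) (Hy0 : 0 <= y0).

Local Notation Fa := (field_a ga 0 eps sB q (fun _ => 0)).
Local Notation Fs := (field_s gs 0 eps sB q (coalbedo Tm Tp bm bp)).
Local Notation weight := (lyap_weight ga gs eps).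

Lemma uncoupled_field_a_pos e y : 0 < e -> - e <= y -> 0 < Fa (- e) y.
Proof.
  intros He Hy. rewrite field_a_eq, (spow4_nonpos (- e)) by lra.
  pose proof (spow4_ge y e He Hy). pose proof (pow_lt e 4 He).
  assert (0 < eps * sB * (spow4 y + 2 * e ^ 4)) by (apply Rmult_lt_0_compat; nra).
  apply Rdiv_lt_0_compat; [|lra]. replace ((- - e) ^ 4) with (e ^ 4) by ring. lra.
Qed.

Lemma uncoupled_field_s_pos e x : 0 < e -> eps * sB * e ^ 4 < q * bm -> - e <= x -> 0 < Fs x (- e).
Proof.
  intros He Hsmall Hx. rewrite field_s_eq, (spow4_nonpos (- e)) by lra.
  pose proof (spow4_ge x e He Hx). pose proof (pow_lt e 4 He).
  pose proof (coalbedo_ge Tm Tp bm bp (- e) HT Hb).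
  assert (eps * sB * - e ^ 4 <= eps * sB * spow4 x) by (apply Rmult_le_compat_l; nra).
  assert (q * bm <= q * coalbedo Tm Tp bm bp (- e)) by (apply Rmult_le_compat_l; lra).
  assert (0 < sB * e ^ 4) by (apply Rmult_lt_0_compat; lra).
  apply Rdiv_lt_0_compat; [|lra]. replace ((- - e) ^ 4) with (e ^ 4) by ring. lra.
Qed.

(* The fields may vanish on the edges of the quadrant itself (e.g. [Fa 0 0 = 0]), but on the
   edges of the quadrant shifted by a small [e] they point strictly inward. *)
Lemma uncoupled_shifted_pos e T u w : 0 < e -> eps * sB * e ^ 4 < q * bm ->
  ode_solution Fa Fs x0 y0 T u w -> forall t, 0 < t < T -> 0 < u t + e /\ 0 < w t + e.
Proof.
  intros He Hsmall (U0 & W0 & CU & CW & D) t Ht.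
  set (constraints := [(fun s => u s + e, fun s => Fa (u s) (w s));
               (fun s => w s + e, fun s => Fs (u s) (w s))]).
  assert (Hin : forall g, In g constraints -> 0 < fst g t).
  { apply (positivity_barrier constraints T); [| | | exact Ht].
    - intros g [<-|[<-|[]]]; simpl.
      + apply (filter_imp (fun s => - e < u s)); [intros; lra|].
        apply (at_right_gt _ x0); [exact CU | lra].
      + apply (filter_imp (fun s => - e < w s)); [intros; lra|].
        apply (at_right_gt _ y0); [exact CW | lra].
    - intros s Hs g [<-|[<-|[]]]; simpl; apply is_derive_add_const, D, Hs.
    - intros s Hs Hge. pose proof (Hge _ (or_introl eq_refl)) as Hu.
      pose proof (Hge _ (or_intror (or_introl eq_refl))) as Hw. simpl in Hu, Hw.
      intros g [<-|[<-|[]]]; simpl; intros Hz.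
      + replace (u s) with (- e) by lra. apply uncoupled_field_a_pos; lra.
      + replace (w s) with (- e) by lra. apply uncoupled_field_s_pos; lra. }
  exact (conj (Hin _ (or_introl eq_refl)) (Hin _ (or_intror (or_introl eq_refl)))).
Qed.

Lemma uncoupled_nonneg T u w : ode_solution Fa Fs x0 y0 T u w ->
  forall t, 0 < t < T -> 0 <= u t /\ 0 <= w t.
Proof.
  intros Hsol t Ht.
  set (e0 := Rmin 1 (q * bm / (eps * sB))).
  assert (He0 : 0 < e0 /\ e0 <= 1 /\ eps * sB * e0 <= q * bm).
  { assert (0 < q * bm / (eps * sB)) by (apply Rdiv_lt_0_compat; nra).
    split; [apply Rmin_case; lra|]. split; [apply Rmin_l|].
    apply Rle_trans with (eps * sB * (q * bm / (eps * sB))).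
    - apply Rmult_le_compat_l; [nra | apply Rmin_r].
    - right. field. nra. }
  assert (Hshift : forall e, 0 < e < e0 -> 0 < u t + e /\ 0 < w t + e).
  { intros e He. apply (uncoupled_shifted_pos e T); auto; [lra|].
    assert (e ^ 4 <= e).
    { assert (e ^ 3 <= 1) by (rewrite <- (pow1 3); apply pow_incr; lra).
      replace (e ^ 4) with (e * e ^ 3) by ring. nra. }
    apply Rle_lt_trans with (eps * sB * e); [apply Rmult_le_compat_l; nra|].
    apply Rlt_le_trans with (eps * sB * e0); [apply Rmult_lt_compat_l; nra | lra]. }
  split; apply (nonneg_of_forall_small _ e0); try lra; intros e He; apply Hshift in He; lra.
Qed.

Definition uncoupled_rate : R := Rmin (lyap_rate gs sB eps) (q * bm / gs).

Lemma uncoupled_rate_pos : 0 < uncoupled_rate.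
Proof.
  unfold uncoupled_rate. apply Rmin_case; [now apply lyap_rate_pos | apply Rdiv_lt_0_compat; nra].
Qed.

Lemma uncoupled_growth x y : 0 <= x -> 0 <= y ->
  uncoupled_rate * (1 + x ^ 4 + y ^ 4) <= weight * Fa x y + Fs x y.
Proof.
  intros Hx Hy. rewrite lyapunov_identity, !spow4_nonneg by lra.
  set (rate := lyap_rate gs sB eps). set (g := uncoupled_rate).
  assert (Hrate : 0 < rate) by now apply lyap_rate_pos.
  assert (Hg : g <= rate /\ g <= q * bm / gs)
    by (unfold g, uncoupled_rate; split; [apply Rmin_l | apply Rmin_r]).
  assert (Hcoal : q * bm / gs <= q * coalbedo Tm Tp bm bp y / gs).
  { apply Rmult_le_compat_r; [left; now apply Rinv_0_lt_compat|].
    apply Rmult_le_compat_l; [lra | now apply coalbedo_ge]. }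
  assert (0 <= (rate - g) * x ^ 4) by (apply Rmult_le_pos; [lra | now apply pow_le]).
  assert (0 <= (rate - g) * y ^ 4) by (apply Rmult_le_pos; [lra | now apply pow_le]).
  assert (0 <= rate * x ^ 4) by (apply Rmult_le_pos; [lra | now apply pow_le]).
  replace ((- 0 * (y - x) + q * coalbedo Tm Tp bm bp y) / gs) with (q * coalbedo Tm Tp bm bp y / gs)
    by (field; lra).
  lra.
Qed.

Lemma uncoupled_lyapunov T u w : ode_solution Fa Fs x0 y0 T u w ->
  forall t, 0 < t < T -> 0 <= u t /\ 0 <= w t /\ 0 <= weight * Fa (u t) (w t) + Fs (u t) (w t).
Proof.
  intros Hsol t Ht. destruct (uncoupled_nonneg T u w Hsol t Ht) as [Hu Hw].
  split; [exact Hu|]. split; [exact Hw|].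
  eapply Rle_trans; [|now apply uncoupled_growth].
  apply Rmult_le_pos; [apply Rlt_le, uncoupled_rate_pos|].
  pose proof (pow_le (u t) 4 Hu). pose proof (pow_le (w t) 4 Hw). lra.
Qed.

Lemma uncoupled_finite_lifetime :
  exists Tb, forall T u w, 0 < T -> ode_solution Fa Fs x0 y0 T u w -> T <= Tb.
Proof.
  set (g := uncoupled_rate). set (m := Rmax weight 1).
  assert (Hg : 0 < g) by apply uncoupled_rate_pos.
  assert (Hm : weight <= m /\ 1 <= m) by (split; [apply Rmax_l | apply Rmax_r]).
  assert (Hm4 : 0 < m ^ 4) by (apply pow_lt; lra).
  assert (Hweight : 0 < weight) by (apply lyap_weight_pos; lra).
  exists (/ (3 * (g / (27 * m ^ 4)) * 1 ^ 3)). intros T u w _ Hsol.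
  apply (lifetime_of_quartic_growth (fun s => weight * u s + 1 * w s + 1)
           (fun s => weight * Fa (u s) (w s) + 1 * Fs (u s) (w s)));
    [apply Rdiv_lt_0_compat; lra | lra |].
  intros t Ht. destruct (uncoupled_nonneg T u w Hsol t Ht) as [Hu Hw].
  destruct Hsol as (_ & _ & _ & _ & D). destruct (D t Ht) as [Du Dw].
  split; [nra|]. split; [now apply is_derive_lin_comb|].
  assert (HV : (weight * u t + 1 * w t + 1) ^ 4 <= m ^ 4 * (27 * (1 + u t ^ 4 + w t ^ 4))).
  { apply Rle_trans with ((m * (1 + u t + w t)) ^ 4); [apply pow_incr; nra|].
    rewrite Rpow_mult_distr. apply Rmult_le_compat_l; [lra|].
    pose proof (pow4_sum3_le 1 (u t) (w t)). rewrite pow1 in H. exact H. }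
  pose proof (uncoupled_growth (u t) (w t) Hu Hw). fold g in H.
  apply Rle_trans with (g * (1 + u t ^ 4 + w t ^ 4)); [|lra].
  apply Rmult_le_reg_l with (27 * m ^ 4); [lra|].
  replace (27 * m ^ 4 * (g / (27 * m ^ 4) * (weight * u t + 1 * w t + 1) ^ 4))
    with (g * (weight * u t + 1 * w t + 1) ^ 4) by (field; lra).
  nra.
Qed.

End Uncoupled.

Section Coupled.

Variables (ga gs lam q sB eps : R) (ba bs : R -> R).
Hypotheses (Hga : 0 < ga) (Hgs : 0 < gs) (Hlam : 0 < lam) (Hq : 0 < q) (HsB : 0 < sB)
  (Hba : forall x, 0 <= ba x) (Hbs : forall x, 0 < bs x) (Heps : 2 < eps).

Local Notation Fa := (field_a ga lam eps sB q ba).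
Local Notation Fs := (field_s gs lam eps sB q bs).
Local Notation weight := (lyap_weight ga gs eps).
Local Notation rate := (lyap_rate gs sB eps).

Definition coupling_bound : R := lam * ((2 + eps) / (4 * gs * eps) + / gs).

(* Beyond this level of [V] the quartic terms dominate the coupling terms. *)
Definition blowup_threshold : R := Rmax weight 1 * (1 + 54 * coupling_bound / rate).

Lemma coupling_bound_pos : 0 < coupling_bound.
Proof.
  unfold coupling_bound. assert (0 < (2 + eps) / (4 * gs * eps)) by (apply Rdiv_lt_0_compat; nra).
  pose proof (Rinv_0_lt_compat gs Hgs). nra.
Qed.

Lemma blowup_threshold_pos : 0 < blowup_threshold.
Proof.
  unfold blowup_threshold. pose proof (Rmax_r weight 1).
  assert (0 < 54 * coupling_bound / rate).
  { apply Rdiv_lt_0_compat; [pose proof coupling_bound_pos; lra | now apply lyap_rate_pos]. }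
  nra.
Qed.

Definition coupled_rate : R := rate / (54 * Rmax weight 1 ^ 4).

Lemma coupled_rate_pos : 0 < coupled_rate.
Proof.
  pose proof (lyap_rate_pos gs sB eps Hgs HsB Heps). pose proof (Rmax_r weight 1).
  apply Rdiv_lt_0_compat; [lra | apply Rmult_lt_0_compat; [lra | apply pow_lt; lra]].
Qed.

Lemma coupling_lower_bound x y : 0 <= x -> 0 <= y ->
  - coupling_bound * (x + y) <=
  (2 + eps) / (4 * gs * eps) * (- lam * (x - y) + q * ba x) + (- lam * (y - x) + q * bs y) / gs.
Proof.
  intros Hx Hy. set (k := (2 + eps) / (4 * gs * eps)).
  assert (Hk : 0 < k) by (apply Rdiv_lt_0_compat; nra).
  assert (Hgs' : 0 < / gs) by now apply Rinv_0_lt_compat.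
  pose proof (Hba x). pose proof (Hbs y).
  assert (0 <= k * lam * y) by (apply Rmult_le_pos; [apply Rmult_le_pos|]; lra).
  assert (0 <= k * (q * ba x)) by (apply Rmult_le_pos; [lra | apply Rmult_le_pos; lra]).
  assert (0 <= / gs * lam * x) by (apply Rmult_le_pos; [apply Rmult_le_pos|]; lra).
  assert (0 <= / gs * (q * bs y)) by (apply Rmult_le_pos; [lra | apply Rmult_le_pos; lra]).
  replace ((- lam * (y - x) + q * bs y) / gs) with (/ gs * (- lam * (y - x) + q * bs y))
    by (field; lra).
  unfold coupling_bound. fold k. lra.
Qed.

Lemma coupled_growth x y : 0 <= x -> 0 <= y -> blowup_threshold <= weight * x + y ->
  coupled_rate * (weight * x + y) ^ 4 <= weight * Fa x y + Fs x y.
Proof.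
  intros Hx Hy HV. pose proof (coupling_lower_bound x y Hx Hy) as Hlin. unfold coupled_rate.
  rewrite lyapunov_identity, !spow4_nonneg by lra.
  set (m := Rmax weight 1). set (K := coupling_bound) in *. set (S := x + y) in Hlin.
  assert (Hrate : 0 < rate) by now apply lyap_rate_pos.
  assert (HK : 0 < K) by apply coupling_bound_pos.
  assert (Hm : weight <= m /\ 1 <= m) by (split; [apply Rmax_l | apply Rmax_r]).
  assert (HVS : weight * x + y <= m * S) by (unfold S; nra).
  assert (HS1 : 1 + 54 * K / rate <= S).
  { apply Rmult_le_reg_l with m; [lra|]. unfold blowup_threshold in HV. fold m K in HV. lra. }
  assert (H54 : 0 < 54 * K / rate) by (apply Rdiv_lt_0_compat; lra).
  assert (Hquart : rate / 27 * S ^ 4 <= rate * (y ^ 4 + 2 * x ^ 4)).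
  { pose proof (pow4_sum3_le x y 0). replace (x + y + 0) with S in H by (unfold S; ring).
    pose proof (pow_le x 4 Hx). simpl in H |- *. nra. }
  assert (HKS : K * S <= rate / 54 * S ^ 4).
  { assert (HS3 : S <= S ^ 3) by (simpl; nra).
    apply Rle_trans with (rate / 54 * S * (54 * K / rate)); [right; field; lra|].
    replace (rate / 54 * S ^ 4) with (rate / 54 * S * S ^ 3) by ring.
    apply Rmult_le_compat_l; [apply Rmult_le_pos; lra | lra]. }
  assert (HV4 : (weight * x + y) ^ 4 <= m ^ 4 * S ^ 4).
  { rewrite <- Rpow_mult_distr. apply pow_incr. split; [|exact HVS].
    pose proof (lyap_weight_pos ga gs eps Hga Hgs ltac:(lra)). nra. }
  assert (Hm4 : 0 < m ^ 4) by (apply pow_lt; lra).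
  apply Rle_trans with (rate / 54 * S ^ 4).
  - apply Rle_trans with (rate / (54 * m ^ 4) * (m ^ 4 * S ^ 4)).
    + apply Rmult_le_compat_l; [apply Rlt_le, Rdiv_lt_0_compat; lra | exact HV4].
    + right. field. lra.
  - lra.
Qed.

Lemma coupled_field_a_pos y : 0 < y -> 0 < Fa 0 y.
Proof.
  intros Hy. rewrite field_a_eq, (spow4_nonneg y), (spow4_nonneg 0) by lra.
  pose proof (Hba 0). pose proof (pow_lt y 4 Hy).
  assert (0 < lam * y) by (apply Rmult_lt_0_compat; lra).
  assert (0 <= eps * sB * y ^ 4) by (apply Rmult_le_pos; nra).
  assert (0 <= q * ba 0) by (apply Rmult_le_pos; lra).
  apply Rdiv_lt_0_compat; [simpl; lra | lra].
Qed.

Lemma coupled_field_s_pos x : 0 <= x -> 0 < Fs x 0.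
Proof.
  intros Hx. rewrite field_s_eq, (spow4_nonneg x), (spow4_nonneg 0) by lra.
  pose proof (Hbs 0). pose proof (pow_le x 4 Hx).
  assert (0 <= lam * x) by (apply Rmult_le_pos; lra).
  assert (0 <= eps * sB * x ^ 4) by (apply Rmult_le_pos; nra).
  assert (0 < q * bs 0) by (apply Rmult_lt_0_compat; lra).
  apply Rdiv_lt_0_compat; [simpl; lra | lra].
Qed.

Local Notation V1 := blowup_threshold.

Lemma coupled_invariant T u w : ode_solution Fa Fs V1 V1 T u w ->
  forall t, 0 < t < T -> 0 < u t /\ 0 < w t /\ V1 < weight * u t + w t.
Proof.
  intros (U0 & W0 & CU & CW & D) t Ht.
  pose proof blowup_threshold_pos as HV1.
  assert (Hweight : 0 < weight) by (apply lyap_weight_pos; lra).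
  set (constraints := [(u, fun s => Fa (u s) (w s)); (w, fun s => Fs (u s) (w s));
               (fun s => weight * u s + 1 * w s + - V1,
                fun s => weight * Fa (u s) (w s) + 1 * Fs (u s) (w s))]).
  assert (Hin : forall g, In g constraints -> 0 < fst g t).
  { apply (positivity_barrier constraints T); [| | | exact Ht].
    - intros g [<-|[<-|[<-|[]]]]; simpl.
      + apply (at_right_gt _ V1); [exact CU | lra].
      + apply (at_right_gt _ V1); [exact CW | lra].
      + apply (at_right_gt _ (weight * V1 + 1 * V1 + - V1)); [|nra].
        now apply filterlim_lin_comb.
    - intros s Hs g [<-|[<-|[<-|[]]]]; simpl; destruct (D s Hs) as [Du Dw];
        [exact Du | exact Dw | now apply is_derive_lin_comb].
    - intros s Hs Hge. pose proof (Hge _ (or_introl eq_refl)) as Hu.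
      pose proof (Hge _ (or_intror (or_introl eq_refl))) as Hw.
      pose proof (Hge _ (or_intror (or_intror (or_introl eq_refl)))) as HV. simpl in Hu, Hw, HV.
      intros g [<-|[<-|[<-|[]]]]; simpl; intros Hz.
      + rewrite Hz. apply coupled_field_a_pos. rewrite Hz in HV. lra.
      + rewrite Hz. now apply coupled_field_s_pos.
      + pose proof (coupled_growth (u s) (w s) Hu Hw ltac:(lra)).
        assert (0 < coupled_rate * (weight * u s + w s) ^ 4)
          by (apply Rmult_lt_0_compat; [apply coupled_rate_pos | apply pow_lt; lra]).
        lra. }
  pose proof (Hin _ (or_introl eq_refl)). pose proof (Hin _ (or_intror (or_introl eq_refl))).
  pose proof (Hin _ (or_intror (or_intror (or_introl eq_refl)))). simpl in *. lra.
Qed.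

Lemma coupled_lyapunov T u w : ode_solution Fa Fs V1 V1 T u w ->
  forall t, 0 < t < T -> 0 <= u t /\ 0 <= w t /\ 0 <= weight * Fa (u t) (w t) + Fs (u t) (w t).
Proof.
  intros Hsol t Ht. destruct (coupled_invariant T u w Hsol t Ht) as (Hu & Hw & HV).
  split; [lra|]. split; [lra|].
  eapply Rle_trans; [|apply coupled_growth; lra].
  pose proof (lyap_weight_pos ga gs eps Hga Hgs ltac:(lra)).
  apply Rmult_le_pos; [apply Rlt_le, coupled_rate_pos | apply pow_le; nra].
Qed.

Lemma coupled_finite_lifetime :
  exists Tb, forall T u w, 0 < T -> ode_solution Fa Fs V1 V1 T u w -> T <= Tb.
Proof.
  exists (/ (3 * coupled_rate * V1 ^ 3)). intros T u w _ Hsol.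
  apply (lifetime_of_quartic_growth (fun s => weight * u s + 1 * w s + 0)
           (fun s => weight * Fa (u s) (w s) + 1 * Fs (u s) (w s)));
    [apply coupled_rate_pos | apply blowup_threshold_pos |].
  intros t Ht. destruct (coupled_invariant T u w Hsol t Ht) as (Hu & Hw & HV).
  destruct Hsol as (_ & _ & _ & _ & D). destruct (D t Ht) as [Du Dw].
  split; [lra|]. split; [now apply is_derive_lin_comb|].
  replace (weight * u t + 1 * w t + 0) with (weight * u t + w t) by ring.
  rewrite !Rmult_1_l. apply coupled_growth; lra.
Qed.

End Coupled.

Lemma globally_lipschitz_const c : globally_lipschitz (fun _ => c).
Proof.
  exists 0. intros x y. rewrite Rminus_eq_0, Rabs_R0, Rmult_0_l. lra.
Qed.

Lemma blows_up_of_lyapunov ga gs lam eps sB q ba bs x0 y0 a :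
  0 < ga -> 0 < gs -> globally_lipschitz ba -> globally_lipschitz bs -> 0 < a ->
  (exists Tb, forall T u w, 0 < T ->
     ode_solution (field_a ga lam eps sB q ba) (field_s gs lam eps sB q bs) x0 y0 T u w ->
     T <= Tb) ->
  (forall T u w,
     ode_solution (field_a ga lam eps sB q ba) (field_s gs lam eps sB q bs) x0 y0 T u w ->
     forall t, 0 < t < T -> 0 <= u t /\ 0 <= w t /\
       0 <= a * field_a ga lam eps sB q ba (u t) (w t) + field_s gs lam eps sB q bs (u t) (w t)) ->
  unique_maximal_solution_blows_up ga gs lam eps sB q ba bs x0 y0.
Proof.
  intros Hga Hgs Hba Hbs Ha [Tb Hlife] Hlyap.
  set (F1 := field_a ga lam eps sB q ba). set (F2 := field_s gs lam eps sB q bs).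
  assert (HF1 : locally_lipschitz2 F1) by now apply field_a_locally_lipschitz.
  assert (HF2 : locally_lipschitz2 F2) by now apply field_s_locally_lipschitz.
  destruct (maximal_ode_solution F1 F2 x0 y0 HF1 HF2 Tb Hlife)
    as (Tmax & HTmax & Hsol & Hmax & Hunb).
  set (u := fst (maximal_flow F1 F2 x0 y0)) in *. set (w := snd (maximal_flow F1 F2 x0 y0)) in *.
  exists Tmax, u, w. split; [exact HTmax|]. split; [now apply is_solution_iff|]. split.
  - intros T Ua Us HT HS. apply Hmax; [exact HT | now apply is_solution_iff].
  - apply (filterlim_p_infty_of_unbounded _ Tmax (Rmax a 1 / Rmin a 1)); [| exact Hunb |].
    + intros t. pose proof (Rabs_pos (u t)). pose proof (Rabs_pos (w t)). lra.
    + apply (sum_abs_quasi_increasing u w (fun s => F1 (u s) (w s)) (fun s => F2 (u s) (w s))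
               a Tmax Ha).
      intros t Ht. destruct (Hlyap _ _ _ Hsol t Ht) as (Hu & Hw & HV).
      destruct Hsol as (_ & _ & _ & _ & D). destruct (D t Ht) as [Du Dw].
      split; [exact Hu|]. split; [exact Hw|]. split; [exact Du|]. split; [exact Dw|]. exact HV.
Qed.

Theorem proposition2p7 (ga gs : R) (hga : 0 < ga) (hgs : 0 < gs) :
  (* (a) *)
  (forall (q sB eps Tm Tp bm bp Ta0 Ts0 : R),
     0 < q -> 0 < sB -> 0 < Tm -> Tm < Tp -> 0 < bm -> bm < bp ->
     2 < eps -> 0 <= Ta0 -> 0 <= Ts0 ->
     unique_maximal_solution_blows_up ga gs 0 eps sB q
       (fun _ => 0) (coalbedo Tm Tp bm bp) Ta0 Ts0) /\
  (* (b) *)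
  (forall (lam q sB eps : R) (ba bs : R -> R),
     0 < lam -> 0 < q -> 0 < sB ->
     (forall x, 0 <= ba x) -> (forall x, 0 < bs x) ->
     globally_lipschitz ba -> globally_lipschitz bs ->
     2 < eps ->
     exists Ta0 Ts0, 0 <= Ta0 /\ 0 <= Ts0 /\
       unique_maximal_solution_blows_up ga gs lam eps sB q ba bs Ta0 Ts0).
Proof.
  split.
  -
    intros q sB eps Tm Tp bm bp Ta0 Ts0 Hq HsB _ HT Hbm Hb Heps HTa0 HTs0.
    apply (blows_up_of_lyapunov _ _ _ _ _ _ _ _ _ _ (lyap_weight ga gs eps)); auto.
    + apply globally_lipschitz_const.
    + now apply coalbedo_globally_lipschitz.
    + apply lyap_weight_pos; lra.
    + now apply uncoupled_finite_lifetime.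
    + now apply uncoupled_lyapunov.
  - intros lam q sB eps ba bs Hlam Hq HsB Hba Hbs Lba Lbs Heps.
    assert (HV1 : 0 < blowup_threshold ga gs lam sB eps) by now apply blowup_threshold_pos.
    exists (blowup_threshold ga gs lam sB eps), (blowup_threshold ga gs lam sB eps).
    split; [lra|]. split; [lra|].
    apply (blows_up_of_lyapunov _ _ _ _ _ _ _ _ _ _ (lyap_weight ga gs eps)); auto.
    + apply lyap_weight_pos; lra.
    + now apply coupled_finite_lifetime.
    + now apply coupled_lyapunov.
Qed.
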